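(* Let $\alpha\in(0,1)$, let $a<T$ and $\lambda$ be positive real numbers, let $u_a\in\mathbb{R}$, and let $f:[a,T]\times\mathbb{R}^{+}\to\mathbb{R}^{+*}$ be continuous. For a function $w$ on $[a,T]$ write $$g(t,w(t)):=\frac{\lambda f(t,w(t))}{\left(\int_a^T f(x,w(x))\,dx\right)^2}.$$ If $(v,M)\in C^{(\alpha)}([a,T],\mathbb{R})\times C^{(\alpha)}([a,T],[0,\infty))$ is a tube solution of the nonlocal conformable fractional thermistor problem $$u^{(\alpha)}(t)=g(t,u(t)),\quad t\in[a,T],\qquad u(a)=u_a,$$ then this problem has a solution $u\in C^{(\alpha)}([a,T],\mathbb{R})$ satisfying $|u(t)-v(t)|\le M(t)$ for all $t\in[a,T]$.
   Context: Conformable fractional derivative: for $\alpha\in(0,1)$ and $h:[0,\infty)\to\mathbb{R}$, $h^{(\alpha)}(t):=\lim_{\epsilon\to0}\frac{h(t+\epsilon t^{1-\alpha})-h(t)}{\epsilon}$ for $t>0$; $h$ is $\alpha$-differentiable if this limit exists. $C^{(\alpha)}([a,T],X)$ denotes the set of functions $[a,T]\to X$ that are $\alpha$-differentiable with continuous $\alpha$-derivative. A pair $(v,M)\in C^{(\alpha)}([a,T],\mathbb{R})\times C^{(\alpha)}([a,T],[0,\infty))$ is a tube solution of $u^{(\alpha)}=g(t,u(t))$, $u(a)=u_a$, if: (i) $(y(t)-v(t))\,(g(t,y(t))-v^{(\alpha)}(t))\le M(t)M^{(\alpha)}(t)$ for every $t\in[a,T]$ and every function $y$ with $|y(t)-v(t)|=M(t)$;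 (ii) $v^{(\alpha)}(t)=g(t,v(t))$ and $M^{(\alpha)}(t)=0$ for all $t\in[a,T]$ with $M(t)=0$; (iii) $|u_a-v(a)|\le M(a)$. *)

From Stdlib Require Import Reals.
From Coquelicot Require Import Coquelicot.
Open Scope R_scope.

(* Conformable fractional derivative of order alpha of h at t (t in [a,T],
   a > 0), for a function considered only on [a,T]:
     lim_{eps -> 0} (h (t + eps t^(1-alpha)) - h t) / eps = l,
   where eps ranges over nonzero values keeping t + eps t^(1-alpha) in [a,T]
   (so the limit is one-sided at the endpoints). *)
Definition conf_deriv_at (alpha a T : R) (h : R -> R) (t l : R) : Prop :=
  filterlim (fun eps => (h (t + eps * Rpower t (1 - alpha)) - h t) / eps)
    (within (fun eps => eps <> 0 /\ a <= t + eps * Rpower t (1 - alpha) <= T)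
       (locally 0))
    (locally l).

Definition continuous_on_ab (a T : R) (d : R -> R) : Prop :=
  forall t, a <= t <= T ->
    filterlim d (within (fun x => a <= x <= T) (locally t)) (locally (d t)).

Definition C_alpha (alpha a T : R) (h dh : R -> R) : Prop :=
  (forall t, a <= t <= T -> conf_deriv_at alpha a T h t (dh t)) /\
  continuous_on_ab a T dh.

Definition continuous_on_strip (a T : R) (f : R -> R -> R) : Prop :=
  forall t x, a <= t <= T ->
    filterlim (fun p : R * R => f (fst p) (snd p))
      (within (fun p : R * R => a <= fst p <= T) (locally (t, x)))
      (locally (f t x)).

Definition thermistor_g (lambda a T : R) (f : R -> R -> R) (w : R -> R) (t : R) : R :=
  lambda * f t (w t) / (RInt (fun x => f x (w x)) a T) ^ 2.

(* In (i), y ranges over the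
   functions for which g(t, y(t)) is defined, i.e. x |-> f(x, y(x)) is
   Riemann integrable on [a,T]. *)
Definition tube_solution (alpha lambda a T ua : R) (f : R -> R -> R)
    (v dv M dM : R -> R) : Prop :=
  (forall t (y : R -> R), a <= t <= T ->
     ex_RInt (fun x => f x (y x)) a T ->
     Rabs (y t - v t) = M t ->
     (y t - v t) * (thermistor_g lambda a T f y t - dv t) <= M t * dM t) /\
  (forall t, a <= t <= T -> M t = 0 ->
     dv t = thermistor_g lambda a T f v t /\ dM t = 0) /\
  Rabs (ua - v a) <= M a.

From Stdlib Require Import Reals Lra Lia Classical ClassicalEpsilon.
From Coquelicot Require Import Coquelicot.
From mathcomp Require ssrnat filter.
Open Scope R_scope.

(* The conformable equation on [[a, T]] (with [a > 0]) is the ordinary equation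
   [u' = t^(alpha-1) g(t, u)]. Replacing [z] by its projection onto the tube
   [|z - v t| <= M t] inside [f] makes the right-hand side bounded between positive
   constants. For a frozen value [c] of the nonlocal integral, Euler polygons with [n]
   steps are built, and the intermediate value theorem chooses [c] as a fixed point of
   [c |-> int_a^T f(x, u_c(x)) dx]. Compactness comes from a free ultrafilter on [nat]:
   the polygons are equi-Lipschitz, so their pointwise ultralimit is a uniform limit and
   solves the modified problem with the limiting constant. Finally the tube condition
   keeps the solution inside the tube, by a first-crossing argument and the mean value
   theorem; there the modified and original problems agree. At zeros of [M] this also
   needs the nonlocal integrals of the solution and of [v] to coincide, which again
   follows from the tube condition. *)

Ltac case_abs := unfold Rabs in *; repeat match goal with
  | |- context [Rcase_abs ?x] => destruct (Rcase_abs x)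
  | H : context [Rcase_abs ?x] |- _ => destruct (Rcase_abs x) end; try lra.
Ltac case_minmax := unfold Rmax, Rmin in *; repeat match goal with
  | |- context [Rle_dec ?x ?y] => destruct (Rle_dec x y)
  | H : context [Rle_dec ?x ?y] |- _ => destruct (Rle_dec x y) end; try lra.

Lemma choice_fun {A B : Type} (P : A -> B -> Prop) :
  (forall x, exists y, P x y) -> exists g, forall x, P x (g x).
Proof.
  intros H. exists (fun x => proj1_sig (constructive_indefinite_description _ (H x))).
  intros x. exact (proj2_sig (constructive_indefinite_description _ (H x))).
Qed.

Lemma le_of_le_add_eps (x y : R) : (forall eta, 0 < eta -> x <= y + eta) -> x <= y.
Proof.
  intros H. destruct (Rle_dec x y) as [|Hn]; auto. specialize (H ((x - y) / 2) ltac:(lra)). lra.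
Qed.

Lemma filterlim_within_eps (F : R -> R) (D : R -> Prop) (x0 l : R) :
  filterlim F (within D (locally x0)) (locally l) <->
  (forall e, 0 < e -> exists d, 0 < d /\
     forall y, D y -> Rabs (y - x0) < d -> Rabs (F y - l) < e).
Proof.
  split.
  - intros H e He. rewrite filterlim_locally in H. destruct (H (mkposreal e He)) as [d Hd].
    exists d. split. apply cond_pos. intros y Dy Hy. exact (Hd y Hy Dy).
  - intros H. apply filterlim_locally. intros [e He]. destruct (H e He) as [d [Hd Hd']].
    exists (mkposreal d Hd). intros y Hy Dy. apply Hd'; auto.
Qed.

Definition cont_at (g : R -> R) (x : R) : Prop :=
  forall e, 0 < e -> exists d, 0 < d /\
    forall y, Rabs (y - x) < d -> Rabs (g y - g x) < e.

Definition cont2_at (F : R -> R -> R) (x z : R) : Prop :=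
  forall e, 0 < e -> exists d, 0 < d /\
    forall x' z', Rabs (x' - x) < d -> Rabs (z' - z) < d -> Rabs (F x' z' - F x z) < e.

Definition cont_within (lo hi : R) (g : R -> R) (x : R) : Prop :=
  forall e, 0 < e -> exists d, 0 < d /\
    forall y, lo <= y <= hi -> Rabs (y - x) < d -> Rabs (g y - g x) < e.

Lemma cont_at_continuity_pt g x : cont_at g x <-> continuity_pt g x.
Proof.
  split.
  - intros H e He. destruct (H e He) as [d [Hd Hd']]. exists d. split; auto.
    intros y [_ Hy]. apply Hd'; auto.
  - intros H e He. destruct (H e He) as [d [Hd Hd']]. exists d. split; auto.
    intros y Hy. destruct (Req_dec y x) as [->|Hne].
    + rewrite Rminus_diag, Rabs_R0; auto.
    + apply (Hd' y). split; auto. split. exact I. now apply not_eq_sym.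
Qed.

Lemma cont_at_continuous g x : cont_at g x -> continuous g x.
Proof. intros H. apply continuity_pt_filterlim. now apply cont_at_continuity_pt. Qed.

Lemma cont_within_of_cont_at lo hi g x : cont_at g x -> cont_within lo hi g x.
Proof. intros H e He. destruct (H e He) as [d [Hd Hd']]. exists d; split; auto. Qed.

Lemma cont_within_ext lo hi (g1 g2 : R -> R) x :
  (forall y, lo <= y <= hi -> g1 y = g2 y) -> lo <= x <= hi ->
  cont_within lo hi g2 x -> cont_within lo hi g1 x.
Proof.
  intros Heq Hx H e He. destruct (H e He) as [d [Hd Hd']]. exists d. split; auto.
  intros y Hy Hyx. rewrite !Heq by auto. auto.
Qed.

Lemma cont_within_reflect lo hi g x :
  cont_within lo hi g x -> cont_within (- hi) (- lo) (fun y => g (- y)) (- x).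
Proof.
  intros H e He. destruct (H e He) as [d [Hd Hd']]. exists d. split; auto.
  intros y Hy Hyx. rewrite Ropp_involutive. apply Hd'. lra.
  replace (- y - x) with (- (y - - x)) by ring. now rewrite Rabs_Ropp.
Qed.

Section ContinuityRules.

Local Ltac transfer := repeat rewrite cont_at_continuity_pt in *.

Lemma cont_at_const c x : cont_at (fun _ => c) x.
Proof. transfer. apply continuity_pt_const. intros ? ?; auto. Qed.
Lemma cont_at_id x : cont_at (fun y => y) x.
Proof. transfer. apply continuity_pt_id. Qed.
Lemma cont_at_plus g1 g2 x : cont_at g1 x -> cont_at g2 x -> cont_at (fun y => g1 y + g2 y) x.
Proof. transfer. apply continuity_pt_plus. Qed.
Lemma cont_at_minus g1 g2 x : cont_at g1 x -> cont_at g2 x -> cont_at (fun y => g1 y - g2 y) x.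
Proof. transfer. apply continuity_pt_minus. Qed.
Lemma cont_at_mult g1 g2 x : cont_at g1 x -> cont_at g2 x -> cont_at (fun y => g1 y * g2 y) x.
Proof. transfer. apply continuity_pt_mult. Qed.
Lemma cont_at_opp g x : cont_at g x -> cont_at (fun y => - g y) x.
Proof. transfer. apply continuity_pt_opp. Qed.
Lemma cont_at_inv g x : cont_at g x -> g x <> 0 -> cont_at (fun y => / g y) x.
Proof. transfer. apply continuity_pt_inv. Qed.

End ContinuityRules.

Lemma Rmax_lipschitz a1 b1 a2 b2 :
  Rabs (Rmax a1 b1 - Rmax a2 b2) <= Rmax (Rabs (a1 - a2)) (Rabs (b1 - b2)).
Proof. case_minmax; case_abs. Qed.
Lemma Rmin_lipschitz a1 b1 a2 b2 :
  Rabs (Rmin a1 b1 - Rmin a2 b2) <= Rmax (Rabs (a1 - a2)) (Rabs (b1 - b2)).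
Proof. case_minmax; case_abs. Qed.

Lemma cont2_at_comp F g1 g2 x : cont2_at F (g1 x) (g2 x) -> cont_at g1 x -> cont_at g2 x ->
  cont_at (fun y => F (g1 y) (g2 y)) x.
Proof.
  intros HF H1 H2 e He. destruct (HF e He) as [d [Hd Hd']].
  destruct (H1 d Hd) as [d1 [Hd1 Hd1']]. destruct (H2 d Hd) as [d2 [Hd2 Hd2']].
  exists (Rmin d1 d2). split. apply Rmin_pos; auto.
  intros y Hy. apply Hd'. apply Hd1'. case_minmax. apply Hd2'. case_minmax.
Qed.

Lemma cont2_at_ext (F G : R -> R -> R) x z :
  (forall x z, F x z = G x z) -> cont2_at G x z -> cont2_at F x z.
Proof.
  intros E H e He. destruct (H e He) as [d [Hd Hd']]. exists d. split; auto.
  intros x' z'. rewrite !E. auto.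
Qed.

Lemma cont2_at_comp2 F g1 g2 x z : cont2_at F (g1 x z) (g2 x z) ->
  cont2_at g1 x z -> cont2_at g2 x z -> cont2_at (fun x z => F (g1 x z) (g2 x z)) x z.
Proof.
  intros HF H1 H2 e He. destruct (HF e He) as [d [Hd Hd']].
  destruct (H1 d Hd) as [d1 [Hd1 Hd1']]. destruct (H2 d Hd) as [d2 [Hd2 Hd2']].
  exists (Rmin d1 d2). split. apply Rmin_pos; auto.
  intros x' z' Hx Hz. apply Hd'. apply Hd1'; case_minmax. apply Hd2'; case_minmax.
Qed.

Lemma cont_cont2_comp g F x z : cont_at g (F x z) -> cont2_at F x z ->
  cont2_at (fun x z => g (F x z)) x z.
Proof.
  intros Hg HF e He. destruct (Hg e He) as [d [Hd Hd']].
  destruct (HF d Hd) as [d1 [Hd1 Hd1']]. exists d1. split; auto.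
Qed.

Lemma cont2_at_fst_of g x z : cont_at g x -> cont2_at (fun x _ => g x) x z.
Proof. intros H e He. destruct (H e He) as [d [Hd Hd']]. exists d; split; auto. Qed.
Lemma cont2_at_snd_of g x z : cont_at g z -> cont2_at (fun _ z => g z) x z.
Proof. intros H e He. destruct (H e He) as [d [Hd Hd']]. exists d; split; auto. Qed.
Lemma cont2_at_fst x z : cont2_at (fun x _ => x) x z.
Proof. apply cont2_at_fst_of, cont_at_id. Qed.
Lemma cont2_at_snd x z : cont2_at (fun _ z => z) x z.
Proof. apply cont2_at_snd_of, cont_at_id. Qed.

Lemma cont3_mult (F : R -> R -> R) (g : R -> R) x0 z0 c0 :
  cont2_at F x0 z0 -> cont_at g c0 ->
  forall e, 0 < e -> exists d, 0 < d /\ forall x z c,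
    Rabs (x - x0) < d -> Rabs (z - z0) < d -> Rabs (c - c0) < d ->
    Rabs (F x z * g c - F x0 z0 * g c0) < e.
Proof.
  intros HF Hg e He.
  set (A := Rabs (F x0 z0) + 1). set (B := Rabs (g c0) + 1).
  assert (HA : 0 < A) by (unfold A; pose proof (Rabs_pos (F x0 z0)); lra).
  assert (HB : 0 < B) by (unfold B; pose proof (Rabs_pos (g c0)); lra).
  set (e1 := Rmin 1 (e / (4 * B))). set (e2 := Rmin 1 (e / (4 * A))).
  assert (He1 : 0 < e1) by (apply Rmin_pos; [lra| apply Rdiv_lt_0_compat; lra]).
  assert (He2 : 0 < e2) by (apply Rmin_pos; [lra| apply Rdiv_lt_0_compat; lra]).
  destruct (HF e1 He1) as [d1 [Hd1 Hd1']]. destruct (Hg e2 He2) as [d2 [Hd2 Hd2']].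
  exists (Rmin d1 d2). split. apply Rmin_pos; auto.
  intros x z c Hx Hz Hc.
  assert (H1 : Rabs (F x z - F x0 z0) < e1) by (apply Hd1'; case_minmax).
  assert (H2 : Rabs (g c - g c0) < e2) by (apply Hd2'; case_minmax).
  replace (F x z * g c - F x0 z0 * g c0)
    with ((F x z - F x0 z0) * g c + F x0 z0 * (g c - g c0)) by ring.
  eapply Rle_lt_trans. apply Rabs_triang. rewrite !Rabs_mult.
  assert (Hgc : Rabs (g c) <= B).
  { unfold B. assert (e2 <= 1) by apply Rmin_l. case_abs. }
  assert (e1 <= e / (4 * B)) by apply Rmin_r. assert (e2 <= e / (4 * A)) by apply Rmin_r.
  assert (Rabs (F x z - F x0 z0) * Rabs (g c) <= e1 * B).
  { apply Rmult_le_compat; try apply Rabs_pos; lra. }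
  assert (Rabs (F x0 z0) * Rabs (g c - g c0) <= A * e2).
  { apply Rmult_le_compat; try apply Rabs_pos; unfold A; lra. }
  assert (e1 * B <= e / 4).
  { apply (Rmult_le_compat_r B) in H; [|lra].
    replace (e / (4 * B) * B) with (e / 4) in H by (field; lra). lra. }
  assert (A * e2 <= e / 4).
  { apply (Rmult_le_compat_l A) in H0; [|lra].
    replace (A * (e / (4 * A))) with (e / 4) in H0 by (field; lra). lra. }
  lra.
Qed.

Lemma cont2_at_plus F1 F2 x z : cont2_at F1 x z -> cont2_at F2 x z ->
  cont2_at (fun x z => F1 x z + F2 x z) x z.
Proof.
  intros H1 H2 e He.
  destruct (H1 (e/2) ltac:(lra)) as [d1 [Hd1 Hd1']]. destruct (H2 (e/2) ltac:(lra)) as [d2 [Hd2 Hd2']].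
  exists (Rmin d1 d2). split. apply Rmin_pos; auto.
  intros x' z' Hx Hz.
  specialize (Hd1' x' z' ltac:(case_minmax) ltac:(case_minmax)).
  specialize (Hd2' x' z' ltac:(case_minmax) ltac:(case_minmax)). case_abs.
Qed.

Lemma cont2_at_opp F x z : cont2_at F x z -> cont2_at (fun x z => - F x z) x z.
Proof.
  intros H e He. destruct (H e He) as [d [Hd Hd']]. exists d. split; auto.
  intros x' z' Hx Hz. specialize (Hd' x' z' Hx Hz). case_abs.
Qed.

Lemma cont2_at_minus F1 F2 x z : cont2_at F1 x z -> cont2_at F2 x z ->
  cont2_at (fun x z => F1 x z - F2 x z) x z.
Proof. intros H1 H2. apply (cont2_at_plus F1 (fun x z => - F2 x z)); auto. now apply cont2_at_opp. Qed.

Lemma cont2_at_mult F1 F2 x z : cont2_at F1 x z -> cont2_at F2 x z ->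
  cont2_at (fun x z => F1 x z * F2 x z) x z.
Proof.
  intros H1 H2 e He.
  destruct (cont3_mult F1 (fun c => c) x z (F2 x z) H1 (cont_at_id _) e He) as [d1 [Hd1 Hd1']].
  destruct (H2 d1 Hd1) as [d2 [Hd2 Hd2']].
  exists (Rmin d1 d2). split. apply Rmin_pos; auto.
  intros x' z' Hx Hz. apply Hd1'. case_minmax. case_minmax. apply Hd2'; case_minmax.
Qed.

Lemma cont2_at_max F1 F2 x z : cont2_at F1 x z -> cont2_at F2 x z ->
  cont2_at (fun x z => Rmax (F1 x z) (F2 x z)) x z.
Proof.
  intros H1 H2 e He. destruct (H1 e He) as [d1 [Hd1 Hd1']]. destruct (H2 e He) as [d2 [Hd2 Hd2']].
  exists (Rmin d1 d2). split. apply Rmin_pos; auto. intros x' z' Hx Hz.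
  eapply Rle_lt_trans. apply Rmax_lipschitz.
  apply Rmax_lub_lt. apply Hd1'; case_minmax. apply Hd2'; case_minmax.
Qed.

Lemma cont2_at_min F1 F2 x z : cont2_at F1 x z -> cont2_at F2 x z ->
  cont2_at (fun x z => Rmin (F1 x z) (F2 x z)) x z.
Proof.
  intros H1 H2 e He. destruct (H1 e He) as [d1 [Hd1 Hd1']]. destruct (H2 e He) as [d2 [Hd2 Hd2']].
  exists (Rmin d1 d2). split. apply Rmin_pos; auto. intros x' z' Hx Hz.
  eapply Rle_lt_trans. apply Rmin_lipschitz.
  apply Rmax_lub_lt. apply Hd1'; case_minmax. apply Hd2'; case_minmax.
Qed.

Lemma cont_at_max g1 g2 x : cont_at g1 x -> cont_at g2 x -> cont_at (fun y => Rmax (g1 y) (g2 y)) x.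
Proof.
  intros H1 H2. apply (cont2_at_comp (fun p q => Rmax p q)); auto.
  apply cont2_at_max; [apply cont2_at_fst|apply cont2_at_snd].
Qed.

Lemma cont_at_min g1 g2 x : cont_at g1 x -> cont_at g2 x -> cont_at (fun y => Rmin (g1 y) (g2 y)) x.
Proof.
  intros H1 H2. apply (cont2_at_comp (fun p q => Rmin p q)); auto.
  apply cont2_at_min; [apply cont2_at_fst|apply cont2_at_snd].
Qed.

(** * Ultralimits *)

Definition free_ultrafilter (U : (nat -> Prop) -> Prop) : Prop :=
  (forall P Q : nat -> Prop, (forall n, P n -> Q n) -> U P -> U Q) /\
  (forall P Q : nat -> Prop, U P -> U Q -> U (fun n => P n /\ Q n)) /\
  ~ U (fun _ => False) /\
  (forall P : nat -> Prop, U P \/ U (fun n => ~ P n)) /\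
  (forall N : nat, U (fun n => (N <= n)%nat)).

Lemma free_ultrafilter_exists : exists U, free_ultrafilter U.
Proof.
  destruct (filter.ultraFilterLemma filter.eventually_filter) as [G [GU HsG]].
  exists G. repeat split.
  - intros P Q PQ GP. exact (filter.filterS PQ GP).
  - intros P Q GP GQ. exact (filter.filterI GP GQ).
  - exact (filter.filter_not_empty G).
  - intros P. exact (filter.in_ultra_setVsetC P GU).
  - intros N. apply HsG. exists N; [exact I|]. intros n Hn. now apply (ssrbool.elimT ssrnat.leP).
Qed.

Section Ultralimits.

Variable U : (nat -> Prop) -> Prop.
Hypothesis HU : free_ultrafilter U.

Lemma U_mono (P Q : nat -> Prop) : U P -> (forall n, P n -> Q n) -> U Q.
Proof. intros HP PQ. exact (proj1 HU P Q PQ HP). Qed.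

Lemma U_and (P Q : nat -> Prop) : U P -> U Q -> U (fun n => P n /\ Q n).
Proof. apply HU. Qed.

Lemma U_or_not (P : nat -> Prop) : U P \/ U (fun n => ~ P n).
Proof. apply HU. Qed.

Lemma U_tail (N : nat) : U (fun n => (N <= n)%nat).
Proof. apply HU. Qed.

Lemma U_forall (P : nat -> Prop) : (forall n, P n) -> U P.
Proof. intros H. apply (U_mono _ _ (U_tail 0)). auto. Qed.

Lemma U_exists (P : nat -> Prop) : U P -> exists n, P n.
Proof.
  intros H. apply NNPP. intros Hn. apply (proj1 (proj2 (proj2 HU))).
  apply (U_mono _ _ H). intros n Pn. apply Hn. eauto.
Qed.

Definition ulim (x : nat -> R) (l : R) : Prop :=
  forall e, 0 < e -> U (fun n => Rabs (x n - l) < e).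

(* The supremum of the reals that the sequence U-eventually exceeds is its ultralimit. *)
Lemma ulim_exists (x : nat -> R) lo hi : U (fun n => lo <= x n <= hi) ->
  exists l, lo <= l <= hi /\ ulim x l.
Proof.
  intros Hb.
  set (E := fun r => U (fun n => r <= x n)).
  assert (HEhi : forall r, E r -> r <= hi).
  { intros r Er. destruct (Rle_dec r hi) as [|Hn]; auto. exfalso.
    destruct (U_exists _ (U_and _ _ Er Hb)) as [n [H1 H2]]. lra. }
  assert (HElo : E lo) by (apply (U_mono _ _ Hb); intros n H; lra).
  destruct (completeness E (ex_intro _ hi HEhi) (ex_intro _ lo HElo)) as [l [Hub Hlub]].
  exists l. split; [split; [now apply Hub|now apply Hlub]|].
  intros e He.
  assert (H1 : exists r, E r /\ l - e < r).
  { apply NNPP. intros Hn. assert (l <= l - e); [|lra].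
    apply Hlub. intros r Er. destruct (Rle_dec r (l - e)) as [|Hr]; auto.
    exfalso. apply Hn. exists r. split; auto. lra. }
  destruct H1 as [r [Er Hr]].
  assert (H2 : U (fun n => x n < l + e / 2)).
  { destruct (U_or_not (fun n => l + e / 2 <= x n)) as [H|H].
    - assert (l + e / 2 <= l) by (apply Hub; exact H). lra.
    - apply (U_mono _ _ H). intros n Hn. lra. }
  apply (U_mono _ _ (U_and _ _ Er H2)). intros n [Ha Hb']. case_abs.
Qed.

Lemma ulim_le (x : nat -> R) l b : ulim x l -> U (fun n => x n <= b) -> l <= b.
Proof.
  intros Hc Hb. destruct (Rle_dec l b) as [|Hn]; auto. exfalso.
  destruct (U_exists _ (U_and _ _ (Hc (l - b) ltac:(lra)) Hb)) as [n [H1 H2]]. case_abs.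
Qed.

Lemma ulim_unique (x : nat -> R) l1 l2 : ulim x l1 -> ulim x l2 -> l1 = l2.
Proof.
  intros H1 H2. apply NNPP. intros Hn.
  assert (0 < Rabs (l1 - l2) / 2) by (assert (l1 - l2 <> 0) by lra; pose proof (Rabs_pos_lt _ H); lra).
  destruct (U_exists _ (U_and _ _ (H1 _ H) (H2 _ H))) as [n [A B]]. case_abs.
Qed.

Lemma ulim_const (x : nat -> R) b : (forall n, x n = b) -> ulim x b.
Proof.
  intros Hx e He. apply U_forall. intros n. rewrite Hx, Rminus_diag, Rabs_R0. exact He.
Qed.

Lemma ulim_div_succ (L : R) : ulim (fun n => L / INR (S n)) 0.
Proof.
  intros d Hd. destruct (INR_archimed 1 (Rabs L / d) ltac:(lra)) as [N HN].
  apply (U_mono _ _ (U_tail N)). intros n Hn.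
  assert (HS : 0 < INR (S n)) by (apply lt_0_INR; lia).
  assert (INR N <= INR (S n)) by (apply le_INR; lia).
  rewrite Rminus_0_r. unfold Rdiv. rewrite Rabs_mult, Rabs_inv, (Rabs_right (INR (S n))) by lra.
  apply (Rmult_lt_reg_r (INR (S n))); [lra|]. rewrite Rmult_assoc, Rinv_l by lra.
  assert (Rabs L / d < INR (S n)) by lra.
  apply (Rmult_lt_compat_r d) in H0; auto.
  replace (Rabs L / d * d) with (Rabs L) in H0 by (field; lra). lra.
Qed.

Lemma ulim_squeeze (xs ys r : nat -> R) l : ulim xs l -> ulim r 0 ->
  (forall n, Rabs (ys n - xs n) <= r n) -> ulim ys l.
Proof.
  intros Hx Hr Hd e He.
  apply (U_mono _ _ (U_and _ _ (Hx (e / 2) ltac:(lra)) (Hr (e / 2) ltac:(lra)))).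
  intros n [H1 H2]. specialize (Hd n). rewrite Rminus_0_r in H2. case_abs.
Qed.

Lemma ulim_cont2 (F : R -> R -> R) xs ys x y : ulim xs x -> ulim ys y -> cont2_at F x y ->
  ulim (fun n => F (xs n) (ys n)) (F x y).
Proof.
  intros H1 H2 HF e He. destruct (HF e He) as [d [Hd Hd']].
  apply (U_mono _ _ (U_and _ _ (H1 d Hd) (H2 d Hd))). intros n [A B]. apply Hd'; auto.
Qed.

Lemma ulim_dist xs ys x y : ulim xs x -> ulim ys y ->
  ulim (fun n => Rabs (xs n - ys n)) (Rabs (x - y)).
Proof.
  intros H1 H2. apply (ulim_cont2 (fun p q => Rabs (p - q))); auto.
  intros e He. exists (e / 2). split. lra. intros. case_abs.
Qed.

Lemma ulim_lipschitz (fs : nat -> R -> R) (g : R -> R) lo hi L :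
  (forall x, lo <= x <= hi -> ulim (fun n => fs n x) (g x)) ->
  (forall n x y, lo <= x <= hi -> lo <= y <= hi -> Rabs (fs n y - fs n x) <= L * Rabs (y - x)) ->
  forall x y, lo <= x <= hi -> lo <= y <= hi -> Rabs (g y - g x) <= L * Rabs (y - x).
Proof.
  intros Hg Hfs x y Hx Hy.
  apply (ulim_le _ _ _ (ulim_dist _ _ _ _ (Hg y Hy) (Hg x Hx))).
  apply U_forall. intros n. now apply Hfs.
Qed.

Lemma ulim_uniform (fs : nat -> R -> R) (g : R -> R) lo hi L : 0 <= L ->
  (forall x, lo <= x <= hi -> ulim (fun n => fs n x) (g x)) ->
  (forall n x y, lo <= x <= hi -> lo <= y <= hi -> Rabs (fs n y - fs n x) <= L * Rabs (y - x)) ->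
  forall e, 0 < e -> U (fun n => forall x, lo <= x <= hi -> Rabs (fs n x - g x) < e).
Proof.
  intros HL Hg Hfs e He.
  pose proof (ulim_lipschitz fs g lo hi L Hg Hfs) as Hgl.
  destruct (U_or_not (fun n => forall x, lo <= x <= hi -> Rabs (fs n x - g x) < e)) as [H|H];
    auto.
  exfalso.
  assert (Hb : forall n, exists x, (~ forall x, lo <= x <= hi -> Rabs (fs n x - g x) < e) ->
      lo <= x <= hi /\ e <= Rabs (fs n x - g x)).
  { intros n. destruct (classic (forall x, lo <= x <= hi -> Rabs (fs n x - g x) < e)) as [H1|H1].
    - exists lo. intros H2. contradiction.
    - apply not_all_ex_not in H1. destruct H1 as [x Hx]. exists x. intros _.
      apply imply_to_and in Hx. destruct Hx. split; auto. lra. }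
  destruct (choice_fun _ Hb) as [xs Hxs].
  destruct (ulim_exists xs lo hi) as [x [Hx Cx]].
  { apply (U_mono _ _ H). intros n Hn. apply (Hxs n Hn). }
  set (dl := e / (4 * (L + 1))).
  assert (Hdl : 0 < dl) by (unfold dl; apply Rdiv_lt_0_compat; lra).
  destruct (U_exists _ (U_and _ _ H (U_and _ _ (Cx dl Hdl) (Hg x Hx (e / 4) ltac:(lra)))))
    as [n [H1 [H2 H3]]].
  destruct (Hxs n H1) as [Hxn Hge]. cbv beta in H2, H3.
  pose proof (Hfs n x (xs n) Hx Hxn). pose proof (Hgl x (xs n) Hx Hxn).
  assert (L * Rabs (xs n - x) <= L * dl) by (apply Rmult_le_compat_l; lra).
  assert (L * dl < e / 4).
  { unfold dl. apply (Rmult_lt_reg_r (4 * (L + 1))). lra.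
    replace (L * (e / (4 * (L + 1))) * (4 * (L + 1))) with (L * e) by (field; lra).
    nra. }
  case_abs.
Qed.

Lemma cont2_bounded_on_rect (F : R -> R -> R) p1 q1 p2 q2 :
  (forall x y, p1 <= x <= q1 -> p2 <= y <= q2 -> cont2_at F x y) ->
  exists B, forall x y, p1 <= x <= q1 -> p2 <= y <= q2 -> F x y <= B.
Proof.
  intros HF. apply NNPP. intros Hn.
  assert (Hb : forall n : nat, exists p : R * R,
      p1 <= fst p <= q1 /\ p2 <= snd p <= q2 /\ INR n < F (fst p) (snd p)).
  { intros n. apply NNPP. intros Hn2. apply Hn. exists (INR n). intros x y Hx Hy.
    apply Rnot_lt_le. intros Hc. apply Hn2. now exists (x, y). }
  destruct (choice_fun _ Hb) as [g Hg].
  destruct (ulim_exists (fun n => fst (g n)) p1 q1) as [x [Hx Cx]].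
  { apply U_forall. apply Hg. }
  destruct (ulim_exists (fun n => snd (g n)) p2 q2) as [y [Hy Cy]].
  { apply U_forall. apply Hg. }
  pose proof (ulim_cont2 _ _ _ _ _ Cx Cy (HF x y Hx Hy)) as Hc.
  destruct (INR_archimed 1 (F x y + 1) ltac:(lra)) as [N HN].
  destruct (U_exists _ (U_and _ _ (Hc 1 ltac:(lra)) (U_tail N))) as [n [H1 H2]].
  destruct (Hg n) as [_ [_ H3]]. apply le_INR in H2. cbv beta in H1. case_abs.
Qed.

Lemma cont2_pos_lower_bound_on_rect (F : R -> R -> R) p1 q1 p2 q2 :
  (forall x y, p1 <= x <= q1 -> p2 <= y <= q2 -> cont2_at F x y /\ 0 < F x y) ->
  exists m, 0 < m /\ forall x y, p1 <= x <= q1 -> p2 <= y <= q2 -> m <= F x y.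
Proof.
  intros HF.
  destruct (cont2_bounded_on_rect (fun x y => / F x y) p1 q1 p2 q2) as [B HB].
  { intros x y Hx Hy. destruct (HF x y Hx Hy) as [Hc Hp].
    apply (cont_cont2_comp (fun w => / w)); auto.
    apply cont_at_inv. apply cont_at_id. lra. }
  exists (/ Rmax B 1). split. apply Rinv_0_lt_compat, (Rlt_le_trans _ 1); [lra|apply Rmax_r].
  intros x y Hx Hy. destruct (HF x y Hx Hy) as [_ Hp].
  specialize (HB x y Hx Hy). rewrite <- (Rinv_inv (F x y)).
  apply Rinv_le_contravar. now apply Rinv_0_lt_compat.
  eapply Rle_trans; [exact HB|apply Rmax_l].
Qed.

End Ultralimits.

(** * Euler polygons *)

Section EulerPolygon.

Variables (t0 u0 h : R) (slope : R -> R -> R).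
Hypothesis Hh : 0 < h.

Definition node (i : nat) : R := t0 + INR i * h.

Definition ramp (x : R) : R := Rmax 0 (Rmin h x).

Fixpoint euler (j : nat) : R -> R :=
  match j with
  | O => fun _ => u0
  | S j' => fun x => euler j' x + slope (node j') (euler j' (node j')) * ramp (x - node j')
  end.

Definition elapsed (j : nat) (x : R) : R := Rmax 0 (Rmin (INR j * h) (x - t0)).

Lemma ramp_mono x y : x <= y -> ramp x <= ramp y.
Proof. unfold ramp; case_minmax. Qed.

Lemma ramp_bounds x : 0 <= ramp x <= h.
Proof. unfold ramp; case_minmax. Qed.

Lemma ramp_nonpos x : x <= 0 -> ramp x = 0.
Proof. unfold ramp; case_minmax. Qed.

Lemma ramp_active x y i : ramp (y - node i) - ramp (x - node i) > 0 -> x - h < node i < y.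
Proof. unfold ramp. set (q := node i). case_minmax. Qed.

Lemma node_step_nonneg j : 0 <= INR j * h.
Proof. apply Rmult_le_pos; [apply pos_INR|lra]. Qed.

Lemma elapsed_S j x : elapsed (S j) x = elapsed j x + ramp (x - node j).
Proof.
  unfold elapsed, ramp, node. rewrite S_INR, Rmult_plus_distr_r, Rmult_1_l.
  pose proof (node_step_nonneg j). set (p := INR j * h) in *. case_minmax.
Qed.

Lemma elapsed_full j x : t0 <= x <= node j -> elapsed j x = x - t0.
Proof. unfold elapsed, node. case_minmax. Qed.

Lemma euler_increment_elapsed j : forall x y A e, x <= y ->
  (forall i, (i < j)%nat -> ramp (y - node i) - ramp (x - node i) > 0 ->
       Rabs (slope (node i) (euler i (node i)) - A) <= e) ->
  Rabs (euler j y - euler j x - A * (elapsed j y - elapsed j x))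
    <= e * (elapsed j y - elapsed j x).
Proof.
  induction j as [|j IH]; intros x y A e Hxy Hs.
  - simpl. unfold elapsed. simpl. rewrite Rmult_0_l. case_minmax; case_abs.
  - simpl. rewrite !elapsed_S.
    assert (Hw : 0 <= ramp (y - node j) - ramp (x - node j))
      by (pose proof (ramp_mono (x - node j) (y - node j)); lra).
    specialize (IH x y A e Hxy (fun i Hi => Hs i ltac:(lia))).
    set (w := ramp (y - node j) - ramp (x - node j)) in *.
    set (s := slope (node j) (euler j (node j))).
    replace (euler j y + s * ramp (y - node j) - (euler j x + s * ramp (x - node j)) -
       A * (elapsed j y + ramp (y - node j) - (elapsed j x + ramp (x - node j))))
      with ((euler j y - euler j x - A * (elapsed j y - elapsed j x)) + (s - A) * w)
      by (unfold w; ring).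
    eapply Rle_trans. apply Rabs_triang. rewrite Rabs_mult, (Rabs_right w) by lra.
    assert (Rabs (s - A) * w <= e * w).
    { destruct (Req_dec w 0) as [H0|H0]. rewrite H0; lra.
      apply Rmult_le_compat_r; [lra|]. apply Hs; [lia|]. unfold w in H0, Hw. lra. }
    unfold w in *. lra.
Qed.

Lemma euler_increment j x y A e : t0 <= x <= node j -> t0 <= y <= node j ->
  (forall i, (i < j)%nat -> Rmin x y - h < node i < Rmax x y ->
       Rabs (slope (node i) (euler i (node i)) - A) <= e) ->
  Rabs (euler j y - euler j x - A * (y - x)) <= e * Rabs (y - x).
Proof.
  intros Hx Hy Hs. destruct (Rle_dec x y) as [Hxy|Hxy].
  - pose proof (euler_increment_elapsed j x y A e Hxy) as H.
    rewrite !elapsed_full in H by auto. replace (y - t0 - (x - t0)) with (y - x) in H by ring.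
    rewrite (Rabs_right (y - x)) by lra. apply H. intros i Hi Hact.
    apply Hs; auto. apply ramp_active in Hact. case_minmax.
  - pose proof (euler_increment_elapsed j y x A e ltac:(lra)) as H.
    rewrite !elapsed_full in H by auto. replace (x - t0 - (y - t0)) with (x - y) in H by ring.
    rewrite (Rabs_left (y - x)) by lra.
    replace (euler j y - euler j x - A * (y - x)) with (- (euler j x - euler j y - A * (x - y)))
      by ring.
    rewrite Rabs_Ropp. replace (e * - (y - x)) with (e * (x - y)) by ring. apply H.
    intros i Hi Hact. apply Hs; auto. apply ramp_active in Hact. case_minmax.
Qed.

Lemma euler_lipschitz j B : (forall x z, Rabs (slope x z) <= B) ->
  forall x y, t0 <= x <= node j -> t0 <= y <= node j ->
  Rabs (euler j y - euler j x) <= B * Rabs (y - x).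
Proof.
  intros HB x y Hx Hy. pose proof (euler_increment j x y 0 B Hx Hy) as H.
  rewrite Rmult_0_l, Rminus_0_r in H. apply H. intros i _ _. rewrite Rminus_0_r. apply HB.
Qed.

Lemma euler_node i k : euler (i + k) (node i) = euler i (node i).
Proof.
  induction k as [|k IH].
  - now rewrite Nat.add_0_r.
  - rewrite Nat.add_succ_r. simpl. rewrite IH, ramp_nonpos. ring.
    unfold node. rewrite plus_INR. pose proof (node_step_nonneg k). nra.
Qed.

Lemma euler_node_le i j : (i <= j)%nat -> euler j (node i) = euler i (node i).
Proof. intros H. replace j with (i + (j - i))%nat by lia. apply euler_node. Qed.

Lemma euler_start j : euler j t0 = u0.
Proof.
  induction j as [|j IH]; simpl; auto. rewrite IH, ramp_nonpos. ring.
  unfold node. pose proof (node_step_nonneg j). lra.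
Qed.

Lemma euler_cont j x : cont_at (euler j) x.
Proof.
  revert x. induction j as [|j IH]; intros x; simpl.
  - apply cont_at_const.
  - apply cont_at_plus. apply IH. apply cont_at_mult. apply cont_at_const.
    unfold ramp. apply cont_at_max. apply cont_at_const. apply cont_at_min. apply cont_at_const.
    apply cont_at_minus. apply cont_at_id. apply cont_at_const.
Qed.

End EulerPolygon.

Lemma euler_cont_param (t0 u0 h : R) (slope : R -> R -> R -> R) (c0 : R) :
  0 < h -> (forall x z, cont2_at (fun c z => slope c x z) c0 z) ->
  forall j e, 0 < e -> exists d, 0 < d /\ forall c, Rabs (c - c0) < d -> forall x,
     Rabs (euler t0 u0 h (slope c) j x - euler t0 u0 h (slope c0) j x) < e.
Proof.
  intros Hh Hc j. induction j as [|j IH]; intros e He.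
  - exists 1. split. lra. intros c _ x. simpl. rewrite Rminus_diag, Rabs_R0. auto.
  - set (nj := node t0 h j).
    set (z0 := euler t0 u0 h (slope c0) j nj).
    destruct (Hc nj z0 (e / (2 * h)) ltac:(apply Rdiv_lt_0_compat; lra)) as [d1 [Hd1 Hd1']].
    destruct (IH (Rmin (e / 2) d1) ltac:(apply Rmin_pos; lra)) as [d2 [Hd2 Hd2']].
    exists (Rmin d1 d2). split. apply Rmin_pos; auto.
    intros c Hcc x. simpl. fold nj z0.
    assert (Hp1 : Rabs (euler t0 u0 h (slope c) j x - euler t0 u0 h (slope c0) j x) < e / 2).
    { eapply Rlt_le_trans. apply Hd2'. case_minmax. apply Rmin_l. }
    assert (Hs : Rabs (slope c nj (euler t0 u0 h (slope c) j nj) - slope c0 nj z0) < e / (2 * h)).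
    { apply Hd1'. case_minmax. eapply Rlt_le_trans. apply Hd2'. case_minmax. apply Rmin_r. }
    set (s1 := slope c nj (euler t0 u0 h (slope c) j nj)) in *.
    set (s0 := slope c0 nj z0) in *.
    pose proof (ramp_bounds h Hh (x - nj)).
    set (w := ramp h (x - nj)) in *.
    replace (euler t0 u0 h (slope c) j x + s1 * w - (euler t0 u0 h (slope c0) j x + s0 * w))
      with ((euler t0 u0 h (slope c) j x - euler t0 u0 h (slope c0) j x) + (s1 - s0) * w) by ring.
    eapply Rle_lt_trans. apply Rabs_triang. rewrite Rabs_mult, (Rabs_right w) by lra.
    assert (Rabs (s1 - s0) * w <= e / (2 * h) * h).
    { apply Rmult_le_compat; try apply Rabs_pos; lra. }
    replace (e / (2 * h) * h) with (e / 2) in H0 by (field; lra). lra.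
Qed.

Definition derive_within (lo hi : R) (h : R -> R) (t D : R) : Prop :=
  forall e, 0 < e -> exists d, 0 < d /\ forall t', lo <= t' <= hi -> Rabs (t' - t) < d ->
    Rabs (h t' - h t - D * (t' - t)) <= e * Rabs (t' - t).

Section DeriveWithin.

Variables lo hi : R.

Lemma derive_within_cont h t D : derive_within lo hi h t D -> cont_within lo hi h t.
Proof.
  intros H e He. destruct (H 1 ltac:(lra)) as [d [Hd Hd']].
  pose proof (Rabs_pos D).
  exists (Rmin d (e / (Rabs D + 2))). split.
  { apply Rmin_pos; auto. apply Rdiv_lt_0_compat; lra. }
  intros y Hy Hyt.
  assert (Hyd : Rabs (y - t) < d) by (eapply Rlt_le_trans; [exact Hyt|apply Rmin_l]).
  specialize (Hd' y Hy Hyd).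
  assert (Hye : Rabs (y - t) < e / (Rabs D + 2)) by (eapply Rlt_le_trans; [exact Hyt|apply Rmin_r]).
  pose proof (Rabs_pos (y - t)).
  assert (Rabs (h y - h t) <= (Rabs D + 1) * Rabs (y - t)).
  { replace (h y - h t) with ((h y - h t - D * (y - t)) + D * (y - t)) by ring.
    eapply Rle_trans. apply Rabs_triang. rewrite Rabs_mult. lra. }
  assert ((Rabs D + 2) * Rabs (y - t) < e).
  { apply (Rmult_lt_compat_l (Rabs D + 2)) in Hye; [|lra].
    replace ((Rabs D + 2) * (e / (Rabs D + 2))) with e in Hye by (field; lra). lra. }
  nra.
Qed.

Lemma derive_within_ext (h1 h2 : R -> R) t D :
  (forall x, lo <= x <= hi -> h1 x = h2 x) -> lo <= t <= hi ->
  derive_within lo hi h1 t D -> derive_within lo hi h2 t D.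
Proof.
  intros He Ht W e Hep. destruct (W e Hep) as [d [Hd Hd']]. exists d. split; auto.
  intros t' Ht' Htd. rewrite <- !He by auto. auto.
Qed.

Lemma derive_within_signed_gap (h1 h2 h3 : R -> R) t D1 D2 D3 s :
  derive_within lo hi h1 t D1 -> derive_within lo hi h2 t D2 -> derive_within lo hi h3 t D3 ->
  derive_within lo hi (fun x => s * (h1 x - h2 x) - h3 x) t (s * (D1 - D2) - D3).
Proof.
  intros W1 W2 W3 e He.
  set (k := 2 * Rabs s + 1). assert (Hk : 0 < k) by (unfold k; pose proof (Rabs_pos s); lra).
  destruct (W1 (e / k) ltac:(apply Rdiv_lt_0_compat; lra)) as [d1 [Hd1 Hd1']].
  destruct (W2 (e / k) ltac:(apply Rdiv_lt_0_compat; lra)) as [d2 [Hd2 Hd2']].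
  destruct (W3 (e / k) ltac:(apply Rdiv_lt_0_compat; lra)) as [d3 [Hd3 Hd3']].
  exists (Rmin d1 (Rmin d2 d3)). split. repeat apply Rmin_pos; auto.
  intros t' Ht' Htd.
  specialize (Hd1' t' Ht' ltac:(case_minmax)). specialize (Hd2' t' Ht' ltac:(case_minmax)).
  specialize (Hd3' t' Ht' ltac:(case_minmax)).
  set (A1 := h1 t' - h1 t - D1 * (t' - t)) in *. set (A2 := h2 t' - h2 t - D2 * (t' - t)) in *.
  set (A3 := h3 t' - h3 t - D3 * (t' - t)) in *.
  replace (s * (h1 t' - h2 t') - h3 t' - (s * (h1 t - h2 t) - h3 t) - (s * (D1 - D2) - D3) * (t' - t))
    with (s * (A1 - A2) - A3) by (unfold A1, A2, A3; ring).
  set (r := Rabs (t' - t)) in *. assert (0 <= r) by apply Rabs_pos.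
  assert (Rabs (s * (A1 - A2) - A3) <= Rabs s * (Rabs A1 + Rabs A2) + Rabs A3).
  { unfold Rminus at 2. eapply Rle_trans. apply Rabs_triang. rewrite Rabs_Ropp, Rabs_mult.
    apply Rplus_le_compat_r. apply Rmult_le_compat_l. apply Rabs_pos.
    unfold Rminus. eapply Rle_trans. apply Rabs_triang. rewrite Rabs_Ropp. lra. }
  assert (Rabs s * (Rabs A1 + Rabs A2) <= Rabs s * (2 * (e / k * r)))
    by (apply Rmult_le_compat_l; [apply Rabs_pos|lra]).
  assert (e / k * r * k = e * r) by (field; lra).
  unfold k in *. nra.
Qed.

Lemma derive_within_is_derive (h : R -> R) x D :
  lo < x < hi -> derive_within lo hi h x D -> is_derive h x D.
Proof.
  intros Hx W. apply is_derive_Reals. intros eps Heps.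
  destruct (W (eps / 2) ltac:(lra)) as [d [Hd Hd']].
  assert (Hdp : 0 < Rmin d (Rmin (x - lo) (hi - x))) by (repeat apply Rmin_pos; lra).
  exists (mkposreal _ Hdp). intros h0 Hh0 Hh0d. simpl in Hh0d.
  specialize (Hd' (x + h0) ltac:(case_minmax; case_abs)
    ltac:(replace (x + h0 - x) with h0 by ring; case_minmax)).
  replace (x + h0 - x) with h0 in Hd' by ring.
  assert (Hp : 0 < Rabs h0) by (apply Rabs_pos_lt; auto).
  replace ((h (x + h0) - h x) / h0 - D) with ((h (x + h0) - h x - D * h0) / h0) by (field; auto).
  unfold Rdiv. rewrite Rabs_mult, Rabs_inv.
  apply (Rmult_le_compat_r (/ Rabs h0)) in Hd'; [|left; apply Rinv_0_lt_compat; auto].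
  replace (eps / 2 * Rabs h0 * / Rabs h0) with (eps / 2) in Hd' by (field; lra). lra.
Qed.

End DeriveWithin.

Lemma Rpower_mul_conj t alpha : 0 < t -> Rpower t (alpha - 1) * Rpower t (1 - alpha) = 1.
Proof.
  intros Ht. rewrite <- Rpower_plus. replace (alpha - 1 + (1 - alpha)) with 0 by ring.
  now apply Rpower_O.
Qed.

(* Along [t + eps t^(1-alpha)] the difference quotient in [eps] is [t^(1-alpha)] times the
   ordinary one, so [h^(alpha)(t) = l] means [h'(t) = t^(alpha-1) l]. *)
Lemma conf_quotient_eq alpha h t l eps : 0 < t -> eps <> 0 ->
  (h (t + eps * Rpower t (1 - alpha)) - h t) / eps - l =
  (h (t + eps * Rpower t (1 - alpha)) - h t
     - Rpower t (alpha - 1) * l * (eps * Rpower t (1 - alpha))) / eps.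
Proof.
  intros Ht Heps.
  replace (Rpower t (alpha - 1) * l * (eps * Rpower t (1 - alpha)))
    with (l * eps * (Rpower t (alpha - 1) * Rpower t (1 - alpha))) by ring.
  rewrite Rpower_mul_conj by auto. field. auto.
Qed.

Lemma conf_deriv_at_derive_within alpha a T h t l : 0 < a -> a <= t <= T ->
  conf_deriv_at alpha a T h t l -> derive_within a T h t (Rpower t (alpha - 1) * l).
Proof.
  intros Ha Ht H e He. unfold conf_deriv_at in H. rewrite filterlim_within_eps in H.
  set (p := Rpower t (1 - alpha)). assert (Hp : 0 < p) by apply exp_pos.
  destruct (H (e * p) ltac:(apply Rmult_lt_0_compat; lra)) as [d [Hd Hd']].
  exists (d * p). split. apply Rmult_lt_0_compat; lra.
  intros t' Ht' Htd.
  destruct (Req_dec t' t) as [->|Hne].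
  { rewrite !Rminus_diag, Rmult_0_r, Rminus_0_r, Rabs_R0. lra. }
  set (eps := (t' - t) / p).
  assert (Heps : t + eps * p = t') by (unfold eps; field; lra).
  assert (Hne0 : eps <> 0).
  { unfold eps. intros H0. apply Hne. unfold Rdiv in H0.
    apply Rmult_integral in H0. destruct H0 as [H0|H0]; [lra|].
    apply Rinv_neq_0_compat in H0; lra. }
  assert (Hlt : Rabs (eps - 0) < d).
  { rewrite Rminus_0_r. apply (Rmult_lt_reg_r p); auto.
    replace (Rabs eps * p) with (Rabs (t' - t)); [lra|].
    rewrite <- Heps. replace (t + eps * p - t) with (eps * p) by ring.
    rewrite Rabs_mult, (Rabs_right p); lra. }
  assert (Hin : a <= t + eps * Rpower t (1 - alpha) <= T) by (fold p; now rewrite Heps).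
  specialize (Hd' eps (conj Hne0 Hin) Hlt).
  rewrite conf_quotient_eq in Hd' by lra. fold p in Hd'. rewrite Heps in Hd'.
  replace (t' - t) with (eps * p) in * by (rewrite <- Heps; ring).
  unfold Rdiv in Hd'. rewrite Rabs_mult, Rabs_inv in Hd'.
  assert (0 < Rabs eps) by (apply Rabs_pos_lt; auto).
  apply (Rmult_lt_compat_r (Rabs eps)) in Hd'; auto.
  rewrite Rmult_assoc, Rinv_l, Rmult_1_r in Hd' by lra.
  rewrite Rabs_mult, (Rabs_right p) by lra. nra.
Qed.

Lemma derive_within_conf_deriv_at alpha a T h t l : 0 < a -> a <= t <= T ->
  derive_within a T h t (Rpower t (alpha - 1) * l) -> conf_deriv_at alpha a T h t l.
Proof.
  intros Ha Ht H. unfold conf_deriv_at. rewrite filterlim_within_eps. intros e He.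
  set (p := Rpower t (1 - alpha)). assert (Hp : 0 < p) by apply exp_pos.
  destruct (H (e / (2 * p)) ltac:(apply Rdiv_lt_0_compat; lra)) as [d [Hd Hd']].
  exists (d / p). split. apply Rdiv_lt_0_compat; lra.
  intros eps [Hne Hin] Hlt. rewrite Rminus_0_r in Hlt.
  assert (Habs : Rabs (t + eps * p - t) = Rabs eps * p).
  { replace (t + eps * p - t) with (eps * p) by ring. rewrite Rabs_mult, (Rabs_right p); lra. }
  assert (Htd : Rabs (t + eps * p - t) < d).
  { rewrite Habs. apply (Rmult_lt_compat_r p) in Hlt; auto.
    replace (d / p * p) with d in Hlt by (field; lra). lra. }
  specialize (Hd' _ Hin Htd). rewrite Habs in Hd'.
  replace (t + eps * p - t) with (eps * p) in Hd' by ring.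
  unfold p. rewrite conf_quotient_eq by lra. fold p. unfold Rdiv. rewrite Rabs_mult, Rabs_inv.
  assert (0 < Rabs eps) by (apply Rabs_pos_lt; auto).
  apply (Rmult_le_compat_r (/ Rabs eps)) in Hd'; [|left; apply Rinv_0_lt_compat; auto].
  replace (e / (2 * p) * (Rabs eps * p) * / Rabs eps) with (e / 2) in Hd' by (field; split; lra).
  lra.
Qed.

Lemma cont_within_sub lo hi lo' hi' g x : lo <= lo' -> hi' <= hi ->
  cont_within lo hi g x -> cont_within lo' hi' g x.
Proof.
  intros H1 H2 H e He. destruct (H e He) as [d [Hd Hd']]. exists d. split; auto.
  intros y Hy. apply Hd'. lra.
Qed.

(* [t0] is the supremum of the points of [[p, q]] where [g <= 0]. *)
Lemma last_nonpos_point (g : R -> R) p q : p < q ->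
  (forall x, p <= x <= q -> cont_within p q g x) -> g p <= 0 -> 0 < g q ->
  exists t0, p <= t0 < q /\ g t0 <= 0 /\ forall s, t0 < s <= q -> 0 < g s.
Proof.
  intros Hpq Hc Hp Hq.
  set (E := fun s => p <= s <= q /\ g s <= 0).
  assert (HB : bound E) by (exists q; intros s [Hs _]; lra).
  assert (Ep : E p) by (split; [lra|auto]).
  destruct (completeness E HB (ex_intro _ p Ep)) as [t0 [Hub Hlub]].
  assert (Ht0 : p <= t0 <= q) by (split; [now apply Hub|apply Hlub; intros s [Hs _]; lra]).
  assert (Hg0 : g t0 <= 0).
  { apply Rnot_lt_le. intros Hpos.
    destruct (Hc t0 Ht0 (g t0) Hpos) as [d [Hd Hd']].
    assert (Hex : exists s, E s /\ t0 - d < s).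
    { apply NNPP. intros Hn. assert (t0 <= t0 - d); [|lra]. apply Hlub. intros s Es.
      apply Rnot_lt_le. intros Hs. apply Hn. now exists s. }
    destruct Hex as [s [[Hs1 Hs2] Hs3]]. assert (s <= t0) by (apply Hub; split; auto).
    specialize (Hd' s Hs1 ltac:(case_abs)). case_abs. }
  exists t0. split; [split|split]; auto.
  - destruct (Req_dec t0 q) as [->|]; lra.
  - intros s Hs. apply Rnot_le_lt. intros Hle. assert (s <= t0) by (apply Hub; split; [lra|auto]).
    lra.
Qed.

Lemma zero_boundary_point (g : R -> R) lo hi xi t1 :
  (forall x, lo <= x <= hi -> cont_within lo hi g x /\ 0 <= g x) ->
  lo <= xi <= hi -> lo <= t1 <= hi -> g xi = 0 -> 0 < g t1 ->
  exists ts, lo <= ts <= hi /\ g ts = 0 /\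
    forall d, 0 < d -> exists s, lo <= s <= hi /\ Rabs (s - ts) < d /\ 0 < g s.
Proof.
  intros Hg Hxi Ht1 Hx H1.
  assert (Hne : xi <> t1) by (intros ->; lra).
  destruct (Rlt_dec xi t1) as [Hlt|Hge].
  - destruct (last_nonpos_point g xi t1) as [ts [Hts [H0 Hpos]]]; auto; try lra.
    { intros x Hx'. apply (cont_within_sub lo hi); try lra. apply Hg. lra. }
    exists ts. split; [lra|]. split; [pose proof (proj2 (Hg ts ltac:(lra))); lra|].
    intros d Hd. set (r := Rmin d (t1 - ts) / 2).
    assert (0 < r /\ r < d /\ r < t1 - ts) by (unfold r; case_minmax).
    exists (ts + r). split; [lra|]. split; [case_abs|]. apply Hpos. lra.
  - destruct (last_nonpos_point (fun y => g (- y)) (- xi) (- t1)) as [ts [Hts [H0 Hpos]]];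
      try rewrite !Ropp_involutive; auto; try lra.
    { intros x Hx'. replace x with (- - x) by apply Ropp_involutive. apply cont_within_reflect.
      apply (cont_within_sub lo hi); try lra. apply Hg. lra. }
    exists (- ts). split; [lra|]. split; [pose proof (proj2 (Hg (- ts) ltac:(lra))); lra|].
    intros d Hd. set (r := Rmin d (- t1 - ts) / 2).
    assert (0 < r /\ r < d /\ r < - t1 - ts) by (unfold r; case_minmax).
    exists (- (ts + r)). split; [lra|]. split; [case_abs|]. apply Hpos. lra.
Qed.

Lemma nonpos_of_deriv_nonpos_where_pos (phi Dphi : R -> R) p q :
  (forall x, p < x < q -> is_derive phi x (Dphi x)) -> (forall x, cont_at phi x) ->
  (forall x, p < x <= q -> 0 < phi x -> Dphi x <= 0) -> phi p <= 0 ->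
  forall t, p <= t <= q -> phi t <= 0.
Proof.
  intros Hd Hc Hsign Hp t Ht. apply Rnot_lt_le. intros Hpos.
  assert (Hpt : p < t) by (destruct (Req_dec p t) as [->|]; lra).
  destruct (last_nonpos_point phi p t Hpt) as [t0 [Ht0 [Hphi0 Hafter]]]; auto.
  { intros x _. apply cont_within_of_cont_at, Hc. }
  destruct (Hc t0 (phi t - phi t0) ltac:(lra)) as [d [Hdpos Hd']].
  set (t0' := t0 + Rmin (d / 2) ((t - t0) / 2)).
  assert (Ht0' : t0 < t0' <= t0 + d / 2 /\ t0' < t) by (unfold t0'; case_minmax).
  assert (Hlt : phi t0' < phi t) by (specialize (Hd' t0' ltac:(case_abs)); case_abs).
  destruct (MVT_gen phi t0' t Dphi) as [c [Hcc Hmvt]];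
    rewrite ?Rmin_left, ?Rmax_right in * by lra.
  - intros x Hx. apply Hd. lra.
  - intros x _. now apply cont_at_continuity_pt.
  - assert (Dphi c <= 0) by (apply Hsign; [lra|apply Hafter; lra]). nra.
Qed.

Lemma RInt_point_update (g g' : R -> R) a T s : a < T -> ex_RInt g a T ->
  (forall x, x <> s -> g' x = g x) -> ex_RInt g' a T /\ RInt g' a T = RInt g a T.
Proof.
  intros HaT Hg Heq.
  assert (Hopen : forall p q, p <= q -> (s <= p \/ q <= s) ->
    forall x, Rmin p q < x < Rmax p q -> g x = g' x).
  { intros p q Hpq Hs x Hx. rewrite Rmin_left, Rmax_right in Hx by lra.
    symmetry. apply Heq. lra. }
  destruct (Rlt_dec a s) as [Has|Has]; [destruct (Rlt_dec s T) as [HsT|HsT]|].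
  - assert (H1 : ex_RInt g a s) by (apply (ex_RInt_Chasles_1 g a s T); [lra|auto]).
    assert (H2 : ex_RInt g s T) by (apply (ex_RInt_Chasles_2 g a s T); [lra|auto]).
    assert (E1 := Hopen a s ltac:(lra) ltac:(lra)). assert (E2 := Hopen s T ltac:(lra) ltac:(lra)).
    assert (H1' : ex_RInt g' a s) by exact (ex_RInt_ext g g' a s E1 H1).
    assert (H2' : ex_RInt g' s T) by exact (ex_RInt_ext g g' s T E2 H2).
    split. exact (ex_RInt_Chasles g' a s T H1' H2').
    rewrite <- (RInt_Chasles g' a s T H1' H2'), <- (RInt_Chasles g a s T H1 H2).
    now rewrite (RInt_ext g g' a s E1), (RInt_ext g g' s T E2).
  - assert (E := Hopen a T ltac:(lra) ltac:(lra)).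
    split. exact (ex_RInt_ext g g' a T E Hg). symmetry. exact (RInt_ext g g' a T E).
  - assert (E := Hopen a T ltac:(lra) ltac:(lra)).
    split. exact (ex_RInt_ext g g' a T E Hg). symmetry. exact (RInt_ext g g' a T E).
Qed.

Lemma RInt_dist_le (g1 g2 : R -> R) a T e : a <= T -> ex_RInt g1 a T -> ex_RInt g2 a T ->
  (forall x, a <= x <= T -> Rabs (g1 x - g2 x) <= e) ->
  Rabs (RInt g1 a T - RInt g2 a T) <= (T - a) * e.
Proof.
  intros HaT H1 H2 H.
  replace (RInt g1 a T - RInt g2 a T) with (RInt (fun x => g1 x - g2 x) a T)
    by exact (RInt_minus g1 g2 a T H1 H2).
  apply abs_RInt_le_const; auto. exact (ex_RInt_minus g1 g2 a T H1 H2).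
Qed.

Lemma RInt_ext_on (g1 g2 : R -> R) a T : a <= T ->
  (forall x, a <= x <= T -> g1 x = g2 x) -> RInt g1 a T = RInt g2 a T.
Proof.
  intros HaT H. apply RInt_ext. intros x Hx.
  rewrite Rmin_left, Rmax_right in Hx by lra. apply H; lra.
Qed.

Lemma ex_RInt_ext_on (g1 g2 : R -> R) a T : a <= T ->
  (forall x, a <= x <= T -> g1 x = g2 x) -> ex_RInt g1 a T -> ex_RInt g2 a T.
Proof.
  intros HaT H. apply ex_RInt_ext. intros x Hx.
  rewrite Rmin_left, Rmax_right in Hx by lra. apply H; lra.
Qed.

Section Thermistor.

Variables (alpha a T lambda ua : R) (f : R -> R -> R) (v dv M dM : R -> R).
Hypotheses (Halpha : 0 < alpha < 1) (Ha : 0 < a) (HaT : a < T) (Hlam : 0 < lambda)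
  (Hf : continuous_on_strip a T f) (Hfpos : forall t x, a <= t <= T -> 0 < f t x)
  (Hv : C_alpha alpha a T v dv) (HM : C_alpha alpha a T M dM)
  (HM0 : forall t, a <= t <= T -> 0 <= M t)
  (Htube : tube_solution alpha lambda a T ua f v dv M dM).

(** * The modified problem *)

(* Data given on [[a, T]] are extended constantly outside, so that every auxiliary
   function below is continuous on the whole real line. *)
Definition clamp (x : R) : R := Rmax a (Rmin T x).

Lemma clamp_in x : a <= clamp x <= T.
Proof. unfold clamp; case_minmax. Qed.
Lemma clamp_id x : a <= x <= T -> clamp x = x.
Proof. unfold clamp; case_minmax. Qed.
Lemma clamp_lipschitz x y : Rabs (clamp x - clamp y) <= Rabs (x - y).
Proof. unfold clamp; case_minmax; case_abs. Qed.

Lemma cont_at_clamp g : (forall x, a <= x <= T -> cont_within a T g x) ->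
  forall x, cont_at (fun y => g (clamp y)) x.
Proof.
  intros H x e He. destruct (H (clamp x) (clamp_in x) e He) as [d [Hd Hd']].
  exists d. split; auto. intros y Hy. apply Hd'. apply clamp_in.
  eapply Rle_lt_trans. apply clamp_lipschitz. auto.
Qed.

Definition kappa (x : R) : R := Rpower (clamp x) (alpha - 1).
Definition fc (x z : R) : R := f (clamp x) z.
Definition vc (x : R) : R := v (clamp x).
Definition Mc (x : R) : R := M (clamp x).

Lemma kappa_pos x : 0 < kappa x.
Proof. apply exp_pos. Qed.

Lemma kappa_le x : kappa x <= Rpower a (alpha - 1).
Proof.
  unfold kappa, Rpower. destruct (clamp_in x) as [H1 H2].
  destruct (Req_dec (clamp x) a) as [->|Hne]. lra.
  left. apply exp_increasing. assert (ln a < ln (clamp x)) by (apply ln_increasing; lra). nra.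
Qed.

Lemma kappa_cont x : cont_at kappa x.
Proof.
  apply (cont_at_clamp (fun y => Rpower y (alpha - 1))). intros y Hy. apply cont_within_of_cont_at, cont_at_continuity_pt.
  apply derivable_continuous_pt.
  exists ((alpha - 1) * Rpower y (alpha - 1 - 1)). apply derivable_pt_lim_power. lra.
Qed.

Lemma fc_cont2 x z : cont2_at fc x z.
Proof.
  intros e He. pose proof (Hf (clamp x) z (clamp_in x)) as H. rewrite filterlim_locally in H.
  destruct (H (mkposreal e He)) as [d Hd].
  exists d. split. apply cond_pos. intros x' z' H1 H2.
  apply (Hd (clamp x', z')); [split|apply clamp_in].
  - eapply Rle_lt_trans. apply clamp_lipschitz. exact H1.
  - exact H2.
Qed.

Lemma C_alpha_derive_within h dh t : C_alpha alpha a T h dh -> a <= t <= T ->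
  derive_within a T h t (kappa t * dh t).
Proof.
  intros Hh Ht. unfold kappa. rewrite clamp_id by auto.
  apply conf_deriv_at_derive_within; auto. now apply Hh.
Qed.

Lemma vc_cont x : cont_at vc x.
Proof.
  apply (cont_at_clamp v). intros y Hy.
  apply (derive_within_cont _ _ _ _ (kappa y * dv y)), C_alpha_derive_within; auto.
Qed.

Lemma Mc_cont x : cont_at Mc x.
Proof.
  apply (cont_at_clamp M). intros y Hy.
  apply (derive_within_cont _ _ _ _ (kappa y * dM y)), C_alpha_derive_within; auto.
Qed.

Lemma Mc_nonneg x : 0 <= Mc x.
Proof. apply HM0, clamp_in. Qed.

Lemma vc_eq x : a <= x <= T -> vc x = v x.
Proof. intros Hx. unfold vc. now rewrite clamp_id. Qed.
Lemma Mc_eq x : a <= x <= T -> Mc x = M x.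
Proof. intros Hx. unfold Mc. now rewrite clamp_id. Qed.
Lemma fc_eq x z : a <= x <= T -> fc x z = f x z.
Proof. intros Hx. unfold fc. now rewrite clamp_id. Qed.

Definition tube_proj (x z : R) : R := vc x + Rmax (- Mc x) (Rmin (Mc x) (z - vc x)).

Lemma tube_proj_in x z : Rabs (tube_proj x z - vc x) <= Mc x.
Proof. pose proof (Mc_nonneg x). unfold tube_proj. case_minmax; case_abs. Qed.
Lemma tube_proj_id x z : Rabs (z - vc x) <= Mc x -> tube_proj x z = z.
Proof. pose proof (Mc_nonneg x). unfold tube_proj. intros; case_minmax; case_abs. Qed.
Lemma tube_proj_lipschitz x z z' : Rabs (tube_proj x z - tube_proj x z') <= Rabs (z - z').
Proof. pose proof (Mc_nonneg x). unfold tube_proj. case_minmax; case_abs. Qed.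
Lemma tube_proj_above x z : z - vc x > Mc x -> tube_proj x z = vc x + Mc x.
Proof. pose proof (Mc_nonneg x). unfold tube_proj. intros; case_minmax. Qed.
Lemma tube_proj_below x z : z - vc x < - Mc x -> tube_proj x z = vc x - Mc x.
Proof. pose proof (Mc_nonneg x). unfold tube_proj. intros; case_minmax. Qed.

Lemma tube_proj_cont2 x z : cont2_at tube_proj x z.
Proof.
  unfold tube_proj. apply cont2_at_plus. apply cont2_at_fst_of, vc_cont.
  apply cont2_at_max. apply (cont2_at_fst_of (fun x => - Mc x)). apply cont_at_opp, Mc_cont.
  apply cont2_at_min. apply cont2_at_fst_of, Mc_cont.
  apply cont2_at_minus. apply cont2_at_snd. apply cont2_at_fst_of, vc_cont.
Qed.

Definition tube_point (x th : R) : R := vc x + th * Mc x.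

Lemma tube_point_cont2 x th : cont2_at tube_point x th.
Proof.
  unfold tube_point. apply cont2_at_plus. apply cont2_at_fst_of, vc_cont.
  apply cont2_at_mult. apply cont2_at_snd. apply cont2_at_fst_of, Mc_cont.
Qed.

Lemma tube_proj_as_point x z : exists th, -1 <= th <= 1 /\ tube_proj x z = tube_point x th.
Proof.
  pose proof (tube_proj_in x z). pose proof (Mc_nonneg x). unfold tube_point.
  destruct (Req_dec (Mc x) 0) as [Hz0|Hz0].
  - exists 0. split. lra. rewrite Hz0 in *. assert (tube_proj x z - vc x = 0) by case_abs. lra.
  - exists ((tube_proj x z - vc x) / Mc x). split.
    + split; apply (Rmult_le_reg_r (Mc x)); try lra;
        unfold Rdiv; rewrite Rmult_assoc, Rinv_l by lra; case_abs.
    + field. auto.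
Qed.

Definition ftube (x z : R) : R := fc x (tube_proj x z).

Lemma ftube_cont2 x z : cont2_at ftube x z.
Proof.
  apply (cont2_at_comp2 fc (fun x _ => x) tube_proj).
  apply fc_cont2. apply cont2_at_fst. apply tube_proj_cont2.
Qed.

Lemma ftube_comp_cont (g : R -> R) x : cont_at g x -> cont_at (fun y => ftube y (g y)) x.
Proof. intros H. apply (cont2_at_comp ftube (fun y => y) g). apply ftube_cont2. apply cont_at_id. auto. Qed.

Lemma ex_RInt_ftube_comp (g : R -> R) : (forall x, cont_at g x) ->
  ex_RInt (fun y => ftube y (g y)) a T.
Proof.
  intros H. apply (ex_RInt_continuous (V := R_CompleteNormedModule)).
  intros z _. apply cont_at_continuous, ftube_comp_cont, H.
Qed.

Lemma ftube_in_tube x z : a <= x <= T -> Rabs (z - v x) <= M x -> ftube x z = f x z.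
Proof.
  intros Hx Hz. unfold ftube. rewrite tube_proj_id, fc_eq; auto.
  now rewrite vc_eq, Mc_eq.
Qed.

Variable U : (nat -> Prop) -> Prop.
Hypothesis HU : free_ultrafilter U.

(* The tube is the continuous image of the compact rectangle [[a, T] x [-1, 1]]. *)
Lemma ftube_bounds : exists m0 F0, 0 < m0 /\ forall x z, m0 <= ftube x z <= F0.
Proof.
  assert (Hc : forall x th, cont2_at (fun x th => fc x (tube_point x th)) x th).
  { intros x th. apply (cont2_at_comp2 fc (fun x _ => x) tube_point).
    apply fc_cont2. apply cont2_at_fst. apply tube_point_cont2. }
  destruct (cont2_bounded_on_rect U HU (fun x th => fc x (tube_point x th)) a T (-1) 1)
    as [F0 HF0]; [intros; apply Hc|].
  destruct (cont2_pos_lower_bound_on_rect U HU (fun x th => fc x (tube_point x th)) a T (-1) 1)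
    as [m0 [Hm0 Hm0']].
  { intros x th Hx _. split. apply Hc. apply Hfpos, clamp_in. }
  exists m0, F0. split; auto. intros x z.
  assert (Hcl : ftube x z = ftube (clamp x) z).
  { unfold ftube, fc, tube_proj, vc, Mc. now rewrite (clamp_id (clamp x)) by apply clamp_in. }
  destruct (tube_proj_as_point (clamp x) z) as [th [Hth Heq]].
  rewrite Hcl. unfold ftube. rewrite Heq.
  split; [apply Hm0'|apply HF0]; auto; apply clamp_in.
Qed.

Lemma ftube_unif_cont e : 0 < e -> exists d, 0 < d /\ forall x z z', a <= x <= T ->
  Rabs (z - z') < d -> Rabs (ftube x z - ftube x z') < e.
Proof.
  intros He. apply NNPP. intros Hn.
  assert (Hb : forall n : nat, exists p : R * R * R, a <= fst (fst p) <= T /\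
     Rabs (snd p - snd (fst p)) <= 1 / INR (S n) /\
     e <= Rabs (ftube (fst (fst p)) (snd (fst p)) - ftube (fst (fst p)) (snd p))).
  { intros n. apply NNPP. intros Hn2. apply Hn. exists (1 / INR (S n)).
    split. apply Rdiv_lt_0_compat; [lra|apply lt_0_INR; lia].
    intros x z z' Hx Hz. apply Rnot_le_lt. intros Hc. apply Hn2.
    exists (x, z, z'). cbn [fst snd]. rewrite (Rabs_minus_sym z' z). repeat split; lra. }
  destruct (choice_fun _ Hb) as [g Hg].
  set (xs n := fst (fst (g n))). set (zs n := snd (fst (g n))). set (zs' n := snd (g n)).
  destruct (choice_fun _ (fun n => tube_proj_as_point (xs n) (zs n))) as [ths Hths].
  destruct (ulim_exists U HU xs a T) as [x [Hx Cx]]; [apply U_forall; auto; apply Hg|].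
  destruct (ulim_exists U HU ths (-1) 1) as [th [_ Cth]]; [apply U_forall; auto; apply Hths|].
  set (w := tube_point x th).
  assert (Cw : ulim U (fun n => tube_proj (xs n) (zs n)) w).
  { apply (ulim_squeeze U HU (fun n => tube_point (xs n) (ths n)) _ (fun _ => 0)).
    - exact (ulim_cont2 U HU _ _ _ _ _ Cx Cth (tube_point_cont2 x th)).
    - now apply ulim_const.
    - intros n. rewrite (proj2 (Hths n)), Rminus_diag, Rabs_R0. lra. }
  assert (Cw' : ulim U (fun n => tube_proj (xs n) (zs' n)) w).
  { apply (ulim_squeeze U HU _ _ _ _ Cw (ulim_div_succ U HU 1)).
    intros n. eapply Rle_trans. apply tube_proj_lipschitz. apply Hg. }
  pose proof (ulim_cont2 U HU _ _ _ _ _ Cx Cw (fc_cont2 x w)) as C1.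
  pose proof (ulim_cont2 U HU _ _ _ _ _ Cx Cw' (fc_cont2 x w)) as C2.
  destruct (U_exists U HU _ (U_and U HU _ _ (C1 (e/2) ltac:(lra)) (C2 (e/2) ltac:(lra))))
    as [n [H1 H2]].
  destruct (Hg n) as [_ [_ H3]]. unfold ftube in H3. fold (xs n) (zs n) (zs' n) in H3.
  cbv beta in H1, H2. case_abs.
Qed.

(** * Consequences of the tube condition *)

Lemma dM_cont_within x : a <= x <= T -> cont_within a T dM x.
Proof.
  intros Hx. pose proof (proj2 HM x Hx) as H. rewrite filterlim_within_eps in H.
  intros e He. destruct (H e He) as [d [Hd Hd']]. exists d. split; auto.
Qed.

(* Sum of the two tube inequalities at the boundary points [v + M] and [v - M], for the
   nonlocal integrals [I1] and [I2] respectively, divided by [M s]. *)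
Definition tube_gap (I1 I2 s : R) : R :=
  lambda * f s (v s + M s) / I1 ^ 2 - lambda * f s (v s - M s) / I2 ^ 2 - 2 * dM s.

Lemma tube_gap_nonpos (y1 y2 : R -> R) s : a <= s <= T -> 0 < M s ->
  ex_RInt (fun x => f x (y1 x)) a T -> ex_RInt (fun x => f x (y2 x)) a T ->
  tube_gap (RInt (fun x => f x (y1 x)) a T) (RInt (fun x => f x (y2 x)) a T) s <= 0.
Proof.
  intros Hs HMs Ex1 Ex2.
  (* Redefining [y1], [y2] at the single point [s] changes no integral. *)
  set (y1' := fun x => if Req_EM_T x s then v s + M s else y1 x).
  set (y2' := fun x => if Req_EM_T x s then v s - M s else y2 x).
  assert (Hy' : forall (y y' : R -> R) w, y' = (fun x => if Req_EM_T x s then w else y x) ->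
      ex_RInt (fun x => f x (y x)) a T ->
      y' s = w /\ ex_RInt (fun x => f x (y' x)) a T /\
      RInt (fun x => f x (y' x)) a T = RInt (fun x => f x (y x)) a T).
  { intros y y' w -> Ex. split; [now destruct (Req_EM_T s s)|].
    apply (RInt_point_update _ _ a T s); auto. intros x Hxs.
    now destruct (Req_EM_T x s). }
  destruct (Hy' y1 y1' _ eq_refl Ex1) as [Hs1 [Ex1' EI1]].
  destruct (Hy' y2 y2' _ eq_refl Ex2) as [Hs2 [Ex2' EI2]].
  pose proof (proj1 Htube s y1' Hs Ex1') as T1. pose proof (proj1 Htube s y2' Hs Ex2') as T2.
  unfold thermistor_g in T1, T2. rewrite EI1, Hs1 in T1. rewrite EI2, Hs2 in T2.
  replace (v s + M s - v s) with (M s) in T1 by ring.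
  replace (v s - M s - v s) with (- M s) in T2 by ring.
  rewrite Rabs_right in T1 by lra. rewrite Rabs_Ropp, Rabs_right in T2 by lra.
  specialize (T1 eq_refl). specialize (T2 eq_refl).
  unfold tube_gap. nra.
Qed.

Lemma tube_gap_cont (I1 I2 ts : R) : a <= ts <= T -> cont_within a T (tube_gap I1 I2) ts.
Proof.
  intros Hts.
  apply (cont_within_ext _ _ _ (fun s => lambda * fc s (vc s + Mc s) / I1 ^ 2
      - lambda * fc s (vc s - Mc s) / I2 ^ 2 - 2 * dM (clamp s))); auto.
  { intros s Hs. unfold tube_gap, fc, vc, Mc. now rewrite clamp_id. }
  apply cont_within_of_cont_at. unfold Rdiv.
  assert (Hfc : forall g, (forall x, cont_at g x) -> cont_at (fun s => fc s (g s)) ts).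
  { intros g Hg. apply (cont2_at_comp fc (fun s => s)); auto using fc_cont2, cont_at_id. }
  repeat apply cont_at_minus; repeat apply cont_at_mult; try apply cont_at_const.
  - apply Hfc. intros. apply cont_at_plus; [apply vc_cont|apply Mc_cont].
  - apply Hfc. intros. apply cont_at_minus; [apply vc_cont|apply Mc_cont].
  - apply (cont_at_clamp dM). apply dM_cont_within.
Qed.

Lemma tube_gap_pos_at_zero (I1 I2 ts : R) : a <= ts <= T -> M ts = 0 -> 0 < I1 < I2 ->
  0 < tube_gap I1 I2 ts.
Proof.
  intros Hts HM0ts HI. unfold tube_gap.
  rewrite HM0ts, (proj2 (proj1 (proj2 Htube) ts Hts HM0ts)), Rplus_0_r, Rminus_0_r.
  pose proof (Hfpos ts (v ts) Hts).
  assert (/ I2 ^ 2 < / I1 ^ 2).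
  { apply Rinv_lt_contravar. apply Rmult_lt_0_compat; apply pow_lt; lra. simpl. nra. }
  assert (0 < lambda * f ts (v ts)) by (apply Rmult_lt_0_compat; auto).
  unfold Rdiv. nra.
Qed.

(* If [M] vanishes somewhere without vanishing identically, the tube condition pins
   down the nonlocal term: at a boundary point of the zero set of [M] a strict
   inequality between the integrals would make [tube_gap] positive, whereas it is
   nonpositive wherever [M > 0]. *)
Lemma RInt_tube_le (y1 y2 : R -> R) xi t1 : a <= xi <= T -> a <= t1 <= T ->
  M xi = 0 -> 0 < M t1 ->
  ex_RInt (fun x => f x (y1 x)) a T -> ex_RInt (fun x => f x (y2 x)) a T ->
  0 < RInt (fun x => f x (y1 x)) a T ->
  RInt (fun x => f x (y2 x)) a T <= RInt (fun x => f x (y1 x)) a T.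
Proof.
  intros Hxi Ht1 HMxi HMt1 Ex1 Ex2 HI1. apply Rnot_lt_le. intros HI12.
  set (I1 := RInt (fun x => f x (y1 x)) a T) in *.
  set (I2 := RInt (fun x => f x (y2 x)) a T) in *.
  destruct (zero_boundary_point M a T xi t1) as [ts [Hts [HMts Hnear]]]; auto.
  { intros x Hx. split; auto.
    apply (derive_within_cont _ _ _ _ (kappa x * dM x)), C_alpha_derive_within; auto. }
  pose proof (tube_gap_pos_at_zero I1 I2 ts Hts HMts ltac:(lra)) as Hpos.
  destruct (tube_gap_cont I1 I2 ts Hts _ Hpos) as [d [Hd Hd']].
  destruct (Hnear d Hd) as [s [Hs [Hsd HMs]]].
  specialize (Hd' s Hs Hsd).
  pose proof (tube_gap_nonpos y1 y2 s Hs HMs Ex1 Ex2). fold I1 I2 in H. case_abs.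
Qed.

Section EulerApproximation.

Variables m0 F0 : R.
Hypothesis Hm0 : 0 < m0.
Hypothesis Hbnd : forall x z, m0 <= ftube x z <= F0.

Definition Ilo : R := (T - a) * m0.
Definition Ihi : R := (T - a) * F0.

Lemma Ilo_pos : 0 < Ilo.
Proof. unfold Ilo. apply Rmult_lt_0_compat; lra. Qed.
Lemma Ilo_le_Ihi : Ilo <= Ihi.
Proof. unfold Ilo, Ihi. destruct (Hbnd 0 0). apply Rmult_le_compat_l; lra. Qed.

Definition clip (c : R) : R := Rmax Ilo (Rmin Ihi c).

Lemma clip_in c : Ilo <= clip c <= Ihi.
Proof. pose proof Ilo_le_Ihi. unfold clip; case_minmax. Qed.
Lemma clip_id c : Ilo <= c <= Ihi -> clip c = c.
Proof. pose proof Ilo_le_Ihi. unfold clip; case_minmax. Qed.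

Lemma RInt_ftube_comp_in (g : R -> R) : (forall x, cont_at g x) ->
  Ilo <= RInt (fun y => ftube y (g y)) a T <= Ihi.
Proof.
  intros Hg. pose proof (ex_RInt_ftube_comp g Hg) as Hex. unfold Ilo, Ihi.
  replace ((T - a) * m0) with (RInt (fun _ => m0) a T) by (rewrite RInt_const; reflexivity).
  replace ((T - a) * F0) with (RInt (fun _ => F0) a T) by (rewrite RInt_const; reflexivity).
  split; apply RInt_le; try lra; auto using ex_RInt_const; intros x _; apply Hbnd.
Qed.

(* Right-hand side of the equivalent ODE [u' = t^(alpha-1) g(t, u)], with the
   nonlocal integral frozen to the constant [c]. *)
Definition rhs (x z c : R) : R := kappa x * (lambda * ftube x z / c ^ 2).

Definition rhs_bound : R := Rpower a (alpha - 1) * (lambda * F0 / Ilo ^ 2).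

Lemma rhs_eq x z c : rhs x z c = (kappa x * lambda * ftube x z) * / (c ^ 2).
Proof. unfold rhs, Rdiv. ring. Qed.

Lemma rhs_abs_le x z c : Ilo <= c -> Rabs (rhs x z c) <= rhs_bound.
Proof.
  intros Hc. pose proof Ilo_pos. pose proof (kappa_pos x). pose proof (kappa_le x).
  destruct (Hbnd x z).
  assert (Hq : lambda * ftube x z / c ^ 2 <= lambda * F0 / Ilo ^ 2).
  { unfold Rdiv. apply Rmult_le_compat; try nra.
    - left. apply Rinv_0_lt_compat. nra.
    - apply Rinv_le_contravar. nra. apply pow_incr. lra. }
  assert (0 <= lambda * ftube x z / c ^ 2).
  { unfold Rdiv. apply Rmult_le_pos. nra. left. apply Rinv_0_lt_compat. nra. }
  unfold rhs, rhs_bound. rewrite Rabs_right by nra. apply Rmult_le_compat; lra.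
Qed.

Lemma rhs_bound_nonneg : 0 <= rhs_bound.
Proof. eapply Rle_trans. apply Rabs_pos. apply (rhs_abs_le 0 0 Ilo). lra. Qed.

Lemma cont_at_inv_sq g x : cont_at g x -> g x <> 0 -> cont_at (fun y => / g y ^ 2) x.
Proof.
  intros Hg Hx. apply (cont_at_inv (fun y => g y ^ 2)).
  - change (cont_at (fun y => g y * (g y * 1)) x).
    apply cont_at_mult; auto. apply (cont_at_mult g (fun _ => 1)); auto. apply cont_at_const.
  - now apply pow_nonzero.
Qed.

Lemma rhs_factor_cont2 x z : cont2_at (fun x z => kappa x * lambda * ftube x z) x z.
Proof.
  apply (cont2_at_mult (fun x _ => kappa x * lambda) ftube).
  - apply cont2_at_fst_of, cont_at_mult. apply kappa_cont. apply cont_at_const.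
  - apply ftube_cont2.
Qed.

Definition step (n : nat) : R := (T - a) / INR (S n).

Lemma step_pos n : 0 < step n.
Proof. unfold step. apply Rdiv_lt_0_compat. lra. apply lt_0_INR; lia. Qed.

Lemma node_in n i : (i <= S n)%nat -> a <= node a (step n) i <= T.
Proof.
  intros Hi. pose proof (step_pos n). unfold node. split.
  - pose proof (pos_INR i). nra.
  - assert (INR i * step n <= INR (S n) * step n)
      by (apply Rmult_le_compat_r; [lra|now apply le_INR]).
    unfold step in *. replace (INR (S n) * ((T - a) / INR (S n))) with (T - a) in H0
      by (field; apply not_0_INR; lia). lra.
Qed.

Lemma node_last n : node a (step n) (S n) = T.
Proof. unfold node, step. field. apply not_0_INR. lia. Qed.

Definition approx (n : nat) (c : R) : R -> R :=
  euler a ua (step n) (fun x z => rhs x z (clip c)) (S n).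

Definition Phi (n : nat) (c : R) : R := RInt (fun x => ftube x (approx n c x)) a T.

Lemma approx_cont n c x : cont_at (approx n c) x.
Proof. apply euler_cont. Qed.

Lemma Phi_in n c : Ilo <= Phi n c <= Ihi.
Proof. apply RInt_ftube_comp_in. intros x. apply approx_cont. Qed.

Lemma Phi_cont n c0 : cont_at (Phi n) c0.
Proof.
  intros e He.
  assert (HaT' : 0 < T - a) by lra.
  destruct (ftube_unif_cont (e / (2 * (T - a)))) as [d [Hd Hd']].
  { apply Rdiv_lt_0_compat; lra. }
  assert (Hpar : forall x z, cont2_at (fun c z => rhs x z (clip c)) c0 z).
  { intros x z. pose proof Ilo_pos.
    apply (cont2_at_ext _ (fun c z => (kappa x * lambda * ftube x z) * / clip c ^ 2)).
    { intros; apply rhs_eq. }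
    apply (cont2_at_mult (fun _ z => kappa x * lambda * ftube x z) (fun c _ => / clip c ^ 2)).
    - apply cont2_at_snd_of.
      apply (cont2_at_comp (fun x z => kappa x * lambda * ftube x z) (fun _ => x) (fun z => z)).
      apply rhs_factor_cont2. apply cont_at_const. apply cont_at_id.
    - apply cont2_at_fst_of, cont_at_inv_sq.
      + unfold clip. apply cont_at_max. apply cont_at_const.
        apply cont_at_min. apply cont_at_const. apply cont_at_id.
      + pose proof (clip_in c0). lra. }
  destruct (euler_cont_param a ua (step n) (fun c x z => rhs x z (clip c)) c0 (step_pos n))
    with (j := S n) (e := d) as [d1 [Hd1 Hd1']]; auto.
  exists d1. split; auto. intros c Hc. unfold Phi.
  eapply Rle_lt_trans.
  { apply (RInt_dist_le _ _ a T (e / (2 * (T - a)))); try lra.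
    1,2: apply ex_RInt_ftube_comp; intros; apply approx_cont.
    intros x Hx. left. apply Hd'; [exact Hx|apply Hd1'; exact Hc]. }
  replace ((T - a) * (e / (2 * (T - a)))) with (e / 2) by (field; lra). lra.
Qed.

Lemma Phi_fixed_point n : {c | Ilo <= c <= Ihi /\ Phi n c = c}.
Proof.
  pose proof Ilo_le_Ihi.
  destruct (IVT_gen (fun c => Phi n c - c) Ilo Ihi 0) as [c [Hc Hc']].
  - intros c. apply continuity_pt_minus. apply cont_at_continuity_pt, Phi_cont.
    apply continuity_pt_id.
  - pose proof (Phi_in n Ilo). pose proof (Phi_in n Ihi). case_minmax.
  - exists c. rewrite Rmin_left, Rmax_right in Hc by lra. split; auto. lra.
Qed.

Definition cfix (n : nat) : R := proj1_sig (Phi_fixed_point n).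
Definition upoly (n : nat) : R -> R := approx n (cfix n).

Lemma cfix_in n : Ilo <= cfix n <= Ihi.
Proof. apply (proj2_sig (Phi_fixed_point n)). Qed.

Lemma cfix_spec n : RInt (fun x => ftube x (upoly n x)) a T = cfix n.
Proof. apply (proj2_sig (Phi_fixed_point n)). Qed.

Lemma upoly_cont n x : cont_at (upoly n) x.
Proof. apply approx_cont. Qed.

Lemma upoly_start n : upoly n a = ua.
Proof. apply euler_start, step_pos. Qed.

Lemma upoly_node n i : (i < S n)%nat ->
  rhs (node a (step n) i) (euler a ua (step n) (fun x z => rhs x z (clip (cfix n))) i
      (node a (step n) i)) (clip (cfix n))
  = rhs (node a (step n) i) (upoly n (node a (step n) i)) (cfix n).
Proof.
  intros Hi. unfold upoly, approx. rewrite <- (euler_node_le a ua (step n) _ (step_pos n) i (S n)) by lia.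
  now rewrite clip_id by apply cfix_in.
Qed.

Lemma upoly_lipschitz n x y : a <= x <= T -> a <= y <= T ->
  Rabs (upoly n y - upoly n x) <= rhs_bound * Rabs (y - x).
Proof.
  intros Hx Hy. apply euler_lipschitz. apply step_pos.
  - intros. apply rhs_abs_le, clip_in.
  - rewrite node_last. lra.
  - rewrite node_last. lra.
Qed.

Lemma upoly_bounds n x : a <= x <= T ->
  ua - rhs_bound * (T - a) <= upoly n x <= ua + rhs_bound * (T - a).
Proof.
  intros Hx. pose proof (upoly_lipschitz n a x ltac:(lra) Hx). rewrite upoly_start in H.
  pose proof rhs_bound_nonneg. assert (Rabs (x - a) <= T - a) by case_abs.
  assert (rhs_bound * Rabs (x - a) <= rhs_bound * (T - a)) by (apply Rmult_le_compat_l; auto).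
  case_abs.
Qed.

Lemma approx_ulimits : exists (u : R -> R) c, Ilo <= c <= Ihi /\ ulim U cfix c /\
  forall x, a <= x <= T -> ulim U (fun n => upoly n x) (u x).
Proof.
  destruct (ulim_exists U HU cfix Ilo Ihi) as [c [Hc Hcv]]; [apply (U_forall U HU), cfix_in|].
  assert (Hpt : forall x, exists l, a <= x <= T -> ulim U (fun n => upoly n x) l).
  { intros x. destruct (classic (a <= x <= T)) as [Hx|Hx]; [|now exists 0].
    destruct (ulim_exists U HU (fun n => upoly n x) (ua - rhs_bound * (T - a))
      (ua + rhs_bound * (T - a))) as [l [_ Hl]].
    { apply (U_forall U HU). intros n. now apply upoly_bounds. }
    now exists l. }
  destruct (choice_fun _ Hpt) as [u Hu].
  now exists u, c.
Qed.

Section Limit.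

Variables (u : R -> R) (c : R).
Hypotheses (Hc : Ilo <= c <= Ihi) (Hcv : ulim U cfix c)
  (Hu : forall x, a <= x <= T -> ulim U (fun n => upoly n x) (u x)).

Definition uc (x : R) : R := u (clamp x).

Lemma uc_eq x : a <= x <= T -> uc x = u x.
Proof. intros Hx. unfold uc. now rewrite clamp_id. Qed.

Lemma uc_start : uc a = ua.
Proof.
  rewrite uc_eq by lra. apply (ulim_unique U HU (fun n => upoly n a)). apply Hu; lra.
  apply (ulim_const U HU). apply upoly_start.
Qed.

Lemma uc_lipschitz x y : Rabs (uc y - uc x) <= rhs_bound * Rabs (y - x).
Proof.
  pose proof rhs_bound_nonneg.
  eapply Rle_trans; [|apply Rmult_le_compat_l; [lra|apply (clamp_lipschitz y x)]].
  apply (ulim_lipschitz U HU upoly u a T); auto using clamp_in. intros. now apply upoly_lipschitz.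
Qed.

Lemma uc_cont x : cont_at uc x.
Proof.
  pose proof rhs_bound_nonneg. intros e He.
  exists (e / (rhs_bound + 1)). split. apply Rdiv_lt_0_compat; lra.
  intros y Hy. pose proof (uc_lipschitz x y). pose proof (Rabs_pos (y - x)).
  assert ((rhs_bound + 1) * Rabs (y - x) < e).
  { apply (Rmult_lt_compat_l (rhs_bound + 1)) in Hy; [|lra].
    replace ((rhs_bound + 1) * (e / (rhs_bound + 1))) with e in Hy by (field; lra). lra. }
  nra.
Qed.

Lemma upoly_unif e : 0 < e -> U (fun n => forall x, a <= x <= T -> Rabs (upoly n x - uc x) < e).
Proof.
  intros He. pose proof rhs_bound_nonneg.
  apply (U_mono U HU _ _ (ulim_uniform U HU upoly u a T rhs_bound H Hu upoly_lipschitz e He)).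
  intros n Hn x Hx. rewrite uc_eq; auto.
Qed.

Lemma c_eq : c = RInt (fun x => ftube x (uc x)) a T.
Proof.
  apply (ulim_unique U HU cfix); auto. intros e He.
  destruct (ftube_unif_cont (e / (2 * (T - a)))) as [d [Hd Hd']].
  { apply Rdiv_lt_0_compat; lra. }
  apply (U_mono U HU _ _ (upoly_unif d Hd)). intros n Hn.
  rewrite <- cfix_spec. eapply Rle_lt_trans.
  { apply (RInt_dist_le _ _ a T (e / (2 * (T - a)))); try lra.
    - apply ex_RInt_ftube_comp, upoly_cont.
    - apply ex_RInt_ftube_comp, uc_cont.
    - intros x Hx. left. apply Hd'; auto. }
  replace ((T - a) * (e / (2 * (T - a)))) with (e / 2) by (field; lra). lra.
Qed.

Lemma uc_derive_within t : a <= t <= T -> derive_within a T uc t (rhs t (uc t) c).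
Proof.
  intros Ht e He. pose proof Ilo_pos. pose proof rhs_bound_nonneg as HB.
  destruct (cont3_mult (fun x z => kappa x * lambda * ftube x z) (fun c => / c ^ 2)
    t (uc t) c (rhs_factor_cont2 t (uc t))) with (e := e) as [rho [Hrho Hrho']]; auto.
  { apply cont_at_inv_sq. apply cont_at_id. lra. }
  set (dl := rho / (4 * (rhs_bound + 1))).
  assert (Hdl : 0 < dl /\ dl <= rho / 4 /\ rhs_bound * (2 * dl) < rho / 2).
  { unfold dl. split; [apply Rdiv_lt_0_compat; lra|]. split.
    - unfold Rdiv. apply Rmult_le_compat_l. lra. apply Rinv_le_contravar; lra.
    - apply (Rmult_lt_reg_r (4 * (rhs_bound + 1))). lra.
      replace (rhs_bound * (2 * (rho / (4 * (rhs_bound + 1)))) * (4 * (rhs_bound + 1)))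
        with (2 * rhs_bound * rho) by (field; lra). nra. }
  exists dl. split; [lra|]. intros t' Ht' Htt'.
  set (D := rhs t (uc t) c).
  apply le_of_le_add_eps. intros eta Heta.
  set (r := Rmin (eta / 2) (rho / 2)).
  assert (Hr : 0 < r /\ r <= eta / 2 /\ r <= rho / 2) by (unfold r; case_minmax).
  destruct (U_exists U HU _ (U_and U HU _ _ (ulim_div_succ U HU (T - a) dl ltac:(lra))
    (U_and U HU _ _ (Hcv rho Hrho) (upoly_unif r ltac:(lra))))) as [n [Hh [Hcn Hun]]].
  fold (step n) in Hh. rewrite Rminus_0_r, Rabs_right in Hh by (left; apply step_pos).
  assert (Hinc : Rabs (upoly n t' - upoly n t - D * (t' - t)) <= e * Rabs (t' - t)).
  { apply euler_increment; try (rewrite node_last; lra). apply step_pos.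
    intros i Hi Hnear. rewrite upoly_node by auto. left.
    assert (Hni : a <= node a (step n) i <= T) by (apply node_in; lia).
    assert (Hti : Rabs (node a (step n) i - t) < 2 * dl) by (case_minmax; case_abs).
    assert (Hui : Rabs (upoly n (node a (step n) i) - uc t) < rho).
    { pose proof (upoly_lipschitz n t (node a (step n) i) Ht Hni).
      assert (rhs_bound * Rabs (node a (step n) i - t) <= rhs_bound * (2 * dl))
        by (apply Rmult_le_compat_l; lra).
      specialize (Hun t Ht). case_abs. }
    unfold D. rewrite !rhs_eq. apply Hrho'; auto. lra. }
  pose proof (Hun t Ht). pose proof (Hun t' Ht'). case_abs.
Qed.

(** * The limit stays in the tube *)

Definition uproj (x : R) : R := tube_proj x (uc x).

Lemma ftube_uc x : a <= x <= T -> ftube x (uc x) = f x (uproj x).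
Proof. intros Hx. apply fc_eq; auto. Qed.

Lemma ex_RInt_f_uproj : ex_RInt (fun x => f x (uproj x)) a T.
Proof.
  apply (ex_RInt_ext_on (fun x => ftube x (uc x))); [lra|apply ftube_uc|].
  apply ex_RInt_ftube_comp, uc_cont.
Qed.

Lemma RInt_f_uproj : RInt (fun x => f x (uproj x)) a T = c.
Proof. rewrite c_eq. symmetry. apply RInt_ext_on; [lra|apply ftube_uc]. Qed.

Lemma ftube_v x : a <= x <= T -> ftube x (vc x) = f x (v x).
Proof.
  intros Hx. rewrite vc_eq by auto. apply ftube_in_tube; auto.
  rewrite Rminus_diag, Rabs_R0. auto.
Qed.

Lemma ex_RInt_f_v : ex_RInt (fun x => f x (v x)) a T.
Proof.
  apply (ex_RInt_ext_on (fun x => ftube x (vc x))); [lra|apply ftube_v|].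
  apply ex_RInt_ftube_comp, vc_cont.
Qed.

Lemma RInt_f_v_ge : Ilo <= RInt (fun x => f x (v x)) a T.
Proof.
  rewrite <- (RInt_ext_on (fun x => ftube x (vc x))) by (lra || apply ftube_v).
  apply RInt_ftube_comp_in, vc_cont.
Qed.

Lemma rhs_uc t : a <= t <= T -> rhs t (uc t) c = kappa t * thermistor_g lambda a T f uproj t.
Proof. intros Ht. unfold rhs, thermistor_g. now rewrite RInt_f_uproj, ftube_uc. Qed.

Lemma thermistor_g_uproj_at_zero xi : a <= xi <= T -> M xi = 0 ->
  thermistor_g lambda a T f uproj xi = dv xi.
Proof.
  intros Hxi HMxi. destruct (proj1 (proj2 Htube) xi Hxi HMxi) as [Hdv _]. rewrite Hdv.
  assert (Hut : forall x, a <= x <= T -> M x = 0 -> uproj x = v x).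
  { intros x Hx HMx. pose proof (tube_proj_in x (uc x)) as H.
    rewrite Mc_eq, HMx, vc_eq in H by auto. unfold uproj. case_abs. }
  unfold thermistor_g. rewrite (Hut xi Hxi HMxi).
  destruct (classic (forall t, a <= t <= T -> M t = 0)) as [Hall|Hn].
  - rewrite (RInt_ext_on (fun x => f x (uproj x)) (fun x => f x (v x))); [reflexivity|lra|].
    intros x Hx. rewrite Hut; auto.
  - apply not_all_ex_not in Hn. destruct Hn as [t1 Ht1].
    apply imply_to_and in Ht1. destruct Ht1 as [Ht1 HMt1].
    assert (HMp : 0 < M t1) by (destruct (HM0 t1 Ht1); [lra|now exfalso; apply HMt1]).
    pose proof Ilo_pos. pose proof RInt_f_v_ge. pose proof RInt_f_uproj.
    rewrite (Rle_antisym (RInt (fun x => f x (uproj x)) a T) (RInt (fun x => f x (v x)) a T));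
      auto; apply (RInt_tube_le _ _ xi t1); auto using ex_RInt_f_uproj, ex_RInt_f_v; lra.
Qed.

Section Comparison.

Variable sg : R.
Hypothesis Hsg : sg = 1 \/ sg = -1.

Definition phi (x : R) : R := sg * (uc x - vc x) - Mc x.
Definition Dphi (x : R) : R := sg * (rhs x (uc x) c - kappa x * dv x) - kappa x * dM x.

Lemma phi_derive_within t : a <= t <= T -> derive_within a T phi t (Dphi t).
Proof.
  intros Ht. apply derive_within_signed_gap.
  - now apply uc_derive_within.
  - apply (derive_within_ext _ _ v); auto. intros; now rewrite vc_eq.
    now apply C_alpha_derive_within.
  - apply (derive_within_ext _ _ M); auto. intros; now rewrite Mc_eq.
    now apply C_alpha_derive_within.
Qed.

Lemma Dphi_nonpos t : a <= t <= T -> 0 < phi t -> Dphi t <= 0.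
Proof.
  intros Ht Hp. unfold phi, Dphi in *. rewrite rhs_uc by auto.
  rewrite vc_eq, Mc_eq in Hp by auto. pose proof (kappa_pos t) as HK.
  set (g := thermistor_g lambda a T f uproj t).
  destruct (HM0 t Ht) as [HMp|HMz].
  - assert (Hutv : uproj t - v t = sg * M t).
    { unfold uproj. destruct Hsg as [-> | ->].
      + rewrite tube_proj_above; rewrite vc_eq, Mc_eq by auto; lra.
      + rewrite tube_proj_below; rewrite vc_eq, Mc_eq by auto; lra. }
    assert (Habs : Rabs (uproj t - v t) = M t).
    { rewrite Hutv. destruct Hsg as [-> | ->]; case_abs. }
    pose proof (proj1 Htube t uproj Ht ex_RInt_f_uproj Habs) as Hi. fold g in Hi. rewrite Hutv in Hi.
    assert (sg * (g - dv t) - dM t <= 0).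
    { apply (Rmult_le_reg_l (M t)); auto. rewrite Rmult_0_r. nra. }
    nra.
  - destruct (proj1 (proj2 Htube) t Ht (eq_sym HMz)) as [_ HdM].
    pose proof (thermistor_g_uproj_at_zero t Ht (eq_sym HMz)) as HZ. fold g in HZ.
    rewrite HZ, HdM. lra.
Qed.

Lemma signed_gap_le t : a <= t <= T -> sg * (uc t - v t) <= M t.
Proof.
  intros Ht. rewrite <- vc_eq, <- Mc_eq by auto.
  enough (phi t <= 0) by (unfold phi in *; lra).
  apply (nonpos_of_deriv_nonpos_where_pos phi Dphi a T); auto.
  - intros x Hx. apply (derive_within_is_derive a T); auto. apply phi_derive_within. lra.
  - intros x. unfold phi. apply cont_at_minus. apply cont_at_mult. apply cont_at_const.
    apply cont_at_minus. apply uc_cont. apply vc_cont. apply Mc_cont.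
  - intros x Hx. apply Dphi_nonpos. lra.
  - unfold phi. rewrite vc_eq, Mc_eq, uc_start by lra.
    pose proof (proj2 (proj2 Htube)). destruct Hsg as [-> | ->]; case_abs.
Qed.

End Comparison.

Lemma uc_in_tube t : a <= t <= T -> Rabs (uc t - v t) <= M t.
Proof.
  intros Ht. pose proof (signed_gap_le 1 (or_introl eq_refl) t Ht).
  pose proof (signed_gap_le (-1) (or_intror eq_refl) t Ht). case_abs.
Qed.

Lemma uproj_eq t : a <= t <= T -> uproj t = uc t.
Proof.
  intros Ht. unfold uproj. apply tube_proj_id. rewrite vc_eq, Mc_eq by auto. now apply uc_in_tube.
Qed.

Lemma thermistor_g_uproj t : a <= t <= T ->
  thermistor_g lambda a T f uproj t = thermistor_g lambda a T f uc t.
Proof.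
  intros Ht. unfold thermistor_g. rewrite uproj_eq by auto.
  rewrite (RInt_ext_on (fun x => f x (uproj x)) (fun x => f x (uc x))); auto. lra.
  intros x Hx. now rewrite uproj_eq.
Qed.

Lemma uc_solves :
  C_alpha alpha a T uc (thermistor_g lambda a T f uc) /\ uc a = ua /\
  forall t, a <= t <= T -> Rabs (uc t - v t) <= M t.
Proof.
  split; [split|split; [apply uc_start|apply uc_in_tube]].
  - intros t Ht. apply derive_within_conf_deriv_at; auto. rewrite <- thermistor_g_uproj by auto.
    replace (Rpower t (alpha - 1)) with (kappa t) by (unfold kappa; now rewrite clamp_id).
    rewrite <- rhs_uc by auto.
    now apply uc_derive_within.
  - intros t Ht. apply filterlim_within_eps.
    set (C := RInt (fun x => f x (uc x)) a T).
    apply (cont_within_ext _ _ _ (fun s => lambda * ftube s (uc s) / C ^ 2)); auto.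
    + intros s Hs. unfold thermistor_g. fold C. now rewrite ftube_uc, uproj_eq.
    + apply cont_within_of_cont_at. unfold Rdiv. apply cont_at_mult. apply cont_at_mult.
      apply cont_at_const. apply ftube_comp_cont, uc_cont. apply cont_at_const.
Qed.

End Limit.

Lemma approx_limit_solves : exists u du : R -> R,
  C_alpha alpha a T u du /\
  (forall t, a <= t <= T -> du t = thermistor_g lambda a T f u t) /\
  u a = ua /\ (forall t, a <= t <= T -> Rabs (u t - v t) <= M t).
Proof.
  destruct approx_ulimits as [u [c [Hc [Hcv Hu]]]].
  destruct (uc_solves u c Hc Hcv Hu) as [HC [Hstart Hin]].
  now exists (uc u), (thermistor_g lambda a T f (uc u)).
Qed.

End EulerApproximation.

Lemma tube_solution_exists_of_ultrafilter : exists u du : R -> R,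
  C_alpha alpha a T u du /\
  (forall t, a <= t <= T -> du t = thermistor_g lambda a T f u t) /\
  u a = ua /\ (forall t, a <= t <= T -> Rabs (u t - v t) <= M t).
Proof.
  destruct ftube_bounds as [m0 [F0 [Hm0 Hbnd]]].
  exact (approx_limit_solves m0 F0 Hm0 Hbnd).
Qed.

End Thermistor.

Theorem theorem18 (alpha a T lambda ua : R) (f : R -> R -> R)
  (v dv M dM : R -> R) :
  0 < alpha < 1 ->
  0 < a -> a < T -> 0 < lambda ->
  continuous_on_strip a T f ->
  (forall t x, a <= t <= T -> 0 < f t x) ->
  C_alpha alpha a T v dv ->
  C_alpha alpha a T M dM ->
  (forall t, a <= t <= T -> 0 <= M t) ->
  tube_solution alpha lambda a T ua f v dv M dM ->
  exists u du : R -> R,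
    C_alpha alpha a T u du /\
    (forall t, a <= t <= T -> du t = thermistor_g lambda a T f u t) /\
    u a = ua /\
    (forall t, a <= t <= T -> Rabs (u t - v t) <= M t).
Proof.
  intros Halpha Ha HaT Hlam Hf Hfpos Hv HM HM0 Htube.
  destruct free_ultrafilter_exists as [U HU].
  eapply tube_solution_exists_of_ultrafilter; eauto.
Qed.
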